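(* Let $S_j$ be local potentials satisfying (A)–(E), let $\Psi_t$ be the flow of $\frac{dx}{dt}=-\nabla W(x)$ on $\mathbb{X}$, let $t>0$ and let $K\subset\mathbb{R}^d$ be compact. For every $n\in\mathbb{N}\cup\{0\}$ there is a constant $L>0$ depending only on $K$, $n$ and $t$ (and the potentials) such that for all Birkhoff configurations $x<y$ with rotation vectors in $K$ and all $i,k\in\mathbb{Z}^d$ with $\|i-k\|=n$, $$(\Psi_ty)_i-(\Psi_tx)_i\ge L\,(y_k-x_k).$$
   Context: Notation: $\|i\|=\sum_{k=1}^d|i_k|$, $B_j^r=\{k:\|k-j\|\le r\}$, $(\tau_{k,l}x)_i=x_{i+k}+l$. Local potentials $S_j:\mathbb{R}^{\mathbb{Z}^d}\to\mathbb{R}$, $j\in\mathbb{Z}^d$, satisfy: (A) there is $r\in(0,\infty)$ and $C^2$ functions $s_j:\mathbb{R}^{B_j^r}\to\mathbb{R}$ with $S_j(x)=s_j(x|_{B_j^r})$; (B) $S_j(\tau_{k,l}x)=S_{j+k}(x)$; (C) each $S_j$ is bounded below and $S_j(x)\to\infty$ as $|x_k-x_j|\to\infty$ whenever $\|k-j\|=1$; (D) $\partial_{i,k}S_j\le0$ for $i\ne k$, and $\partial_{i,k}S_i<0$ when $\|i-k\|=1$; (E) $|\partial_{i,k}S_j|\le C$ uniformly. $\mathbb{X}=\{x:\sum_i2^{-\|i\|}|x_i|<\infty\}$; $(\nabla W(x))_i=\sum_{\|j-i\|\le r}\partial_iS_j(x)$; $\Psi_t$ is the complete flow of $\dot x=-\nabla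 W(x)$ on $\mathbb{X}$ (which contains all Birkhoff configurations). Order: $x<y$ iff $x_i\le y_i$ for all $i$ and $x\ne y$. Birkhoff: for every $(k,l)$, $\tau_{k,l}x\ge x$ or $\tau_{k,l}x\le x$; rotation vector $\omega$: $\lim_nx_{ni}/n=\langle\omega,i\rangle$ for all $i$. *)

From Stdlib Require Import Reals Lra Lia ZArith List Classical ClassicalEpsilon.
From Stdlib Require Fin.
Import ListNotations.
Open Scope R_scope.

Definition Zd (d : nat) := Fin.t d -> Z.
Definition config (d : nat) := Zd d -> R.

Definition zadd {d} (i j : Zd d) : Zd d := fun m => (i m + j m)%Z.
Definition zsub {d} (i j : Zd d) : Zd d := fun m => (i m - j m)%Z.
Definition zscale {d} (n : nat) (i : Zd d) : Zd d := fun m => (Z.of_nat n * i m)%Z.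

Fixpoint sumFinZ (d : nat) : (Fin.t d -> Z) -> Z :=
  match d with
  | O => fun _ => 0%Z
  | S d' => fun f => (f Fin.F1 + sumFinZ d' (fun k => f (Fin.FS k)))%Z
  end.

Fixpoint sumFinR (d : nat) : (Fin.t d -> R) -> R :=
  match d with
  | O => fun _ => 0
  | S d' => fun f => f Fin.F1 + sumFinR d' (fun k => f (Fin.FS k))
  end.

Definition norm1 {d} (i : Zd d) : Z := sumFinZ d (fun m => Z.abs (i m)).

Definition inner {d} (w : Fin.t d -> R) (i : Zd d) : R :=
  sumFinR d (fun m => w m * IZR (i m)).

Definition tau {d} (k : Zd d) (l : Z) (x : config d) : config d :=
  fun i => x (zadd i k) + IZR l.

Definition upd {d} (x : config d) (i : Zd d) (v : R) : config d :=
  fun k => if excluded_middle_informative (k = i) then v else x k.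

Definition zrange (N : nat) : list Z :=
  map (fun m => (Z.of_nat m - Z.of_nat N)%Z) (seq 0 (2 * N + 1)).

Definition fcons {d} (a : Z) (v : Zd d) : Zd (S d) :=
  fun k => Fin.caseS' k (fun _ => Z) a v.

Fixpoint cube (d : nat) (N : nat) : list (Zd d) :=
  match d with
  | O => [fun k => Fin.case0 (fun _ => Z) k]
  | S d' => flat_map (fun a => map (fun v => fcons a v) (cube d' N)) (zrange N)
  end.

Definition ball {d} (i : Zd d) (r : R) : list (Zd d) :=
  map (fun v => zadd i v)
    (filter (fun v => if Rle_dec (IZR (norm1 v)) r then true else false)
       (cube d (Z.to_nat (up r)))).

(** (grad W(x))_i = sum_{||j - i|| <= r} d_i S_j (x), where dS j i x = d_i S_j (x) *)
Definition gradW {d} (dS : Zd d -> Zd d -> config d -> R) (r : R) (x : config d) : config d :=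
  fun i => fold_right Rplus 0 (map (fun j => dS j i x) (ball i r)).

(** weighted norm  sum_i 2^{-||i||} |x_i|  is at most eps  (finite partial sums) *)
Definition wnorm_le {d} (x : config d) (eps : R) : Prop :=
  forall l : list (Zd d), NoDup l ->
    fold_right Rplus 0 (map (fun i => (/ 2) ^ (Z.to_nat (norm1 i)) * Rabs (x i)) l) <= eps.

Definition inX {d} (x : config d) : Prop := exists M, wnorm_le x M.

(** Standing assumptions (A)-(E) on the local potentials S_j, with
    dS j i  = d_i S_j   and   ddS j i k = d_k d_i S_j. *)
Definition potentials_ok {d} (S : Zd d -> config d -> R)
    (dS : Zd d -> Zd d -> config d -> R)
    (ddS : Zd d -> Zd d -> Zd d -> config d -> R) (r : R) : Prop :=
  0 < r /\
  (forall j x y, (forall k, IZR (norm1 (zsub k j)) <= r -> x k = y k) -> S j x = S j y) /\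
  (forall j i x, derivable_pt_lim (fun h => S j (upd x i (x i + h))) 0 (dS j i x)) /\
  (forall j i k x, derivable_pt_lim (fun h => dS j i (upd x k (x k + h))) 0 (ddS j i k x)) /\
  (forall j i k x eps, 0 < eps -> exists del, 0 < del /\
     forall y, (forall m, IZR (norm1 (zsub m j)) <= r -> Rabs (y m - x m) < del) ->
       Rabs (ddS j i k y - ddS j i k x) < eps) /\
  (forall j k (l : Z) x, S j (tau k l x) = S (zadd j k) x) /\
  (forall j, exists m, forall x, m <= S j x) /\
  (forall j k, norm1 (zsub k j) = 1%Z -> forall M, exists R0,
     forall x, R0 < Rabs (x k - x j) -> M < S j x) /\
  (forall j i k x, i <> k -> ddS j i k x <= 0) /\
  (forall i k x, norm1 (zsub i k) = 1%Z -> ddS i i k x < 0) /\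
  (exists C, forall j i k x, Rabs (ddS j i k x) <= C).

(** Psi is the complete flow of dx/dt = - grad W (x) on X (derivative in the X-norm). *)
Definition is_flow {d} (dS : Zd d -> Zd d -> config d -> R) (r : R)
    (Psi : R -> config d -> config d) : Prop :=
  forall x, inX x ->
    Psi 0 x = x /\
    forall t, inX (Psi t x) /\
      forall eps, 0 < eps -> exists del, 0 < del /\
        forall h, h <> 0 -> Rabs h < del ->
          wnorm_le (fun i => (Psi (t + h) x i - Psi t x i) / h + gradW dS r (Psi t x) i) eps.

Definition clt {d} (x y : config d) : Prop := (forall i, x i <= y i) /\ x <> y.

Definition birkhoff {d} (x : config d) : Prop :=
  forall (k : Zd d) (l : Z), (forall i, x i <= tau k l x i) \/ (forall i, tau k l x i <= x i).

Definition rot_vector {d} (x : config d) (w : Fin.t d -> R) : Prop :=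
  forall i : Zd d, Un_cv (fun n => x (zscale n i) / INR n) (inner w i).

(** compact subsets of R^d (sequential compactness, componentwise convergence) *)
Definition compactRd {d} (K : (Fin.t d -> R) -> Prop) : Prop :=
  forall u : nat -> (Fin.t d -> R), (forall n, K (u n)) ->
    exists (phi : nat -> nat) (w : Fin.t d -> R),
      (forall n, (phi n < phi (S n))%nat) /\ K w /\
      forall m, Un_cv (fun n => u (phi n) m) (w m).

From Stdlib Require Import Reals Lra Lia ZArith List Classical ClassicalEpsilon FunctionalExtensionality.
From Stdlib Require Fin.
Import ListNotations.
Open Scope R_scope.

(* Write u(s) = Psi_s y - Psi_s x.  Along the flow, u_i' = -(grad W(Psi_s y) - grad W(Psi_s x))_i,
   and by the mean value theorem this is a linear combination of u with the mixed second
   derivatives of the S_j as coefficients.  Condition (D) makes the system cooperative: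
   (1) a comparison principle (for solutions with exponential growth in ||i||) shows u >= 0;
   (2) then  u_i' + Ch u_i >= 0  and, for neighbours i,j,  u_i' + Ch u_i >= c u_j, where
       c > 0 comes from the strict inequality in (D).  To make c uniform we show that the
       flow of a Birkhoff configuration with rotation vector w keeps the oscillation
       x_{p+v} - x_p - <w,v> bounded (comparison with translates), so only a compact set of
       local shapes occurs, and continuity of the second derivatives gives a uniform c;
   (3) integrating these differential inequalities along a lattice path of length n gives
       exp(Ch s) u_i(s) >= (c s)^n / n! * u_k(0). *)

(** * Lattice geometry of Z^d *)

Lemma sumFinZ_ext d (f g : Fin.t d -> Z) :
  (forall m, f m = g m) -> sumFinZ d f = sumFinZ d g.
Proof.
  induction d; simpl; intros H; auto.
  rewrite H, (IHd _ (fun k => g (Fin.FS k))); auto.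
Qed.

Lemma sumFinZ_le d (f g : Fin.t d -> Z) :
  (forall m, (f m <= g m)%Z) -> (sumFinZ d f <= sumFinZ d g)%Z.
Proof.
  induction d; simpl; intros H; [lia|].
  pose proof (IHd (fun k => f (Fin.FS k)) (fun k => g (Fin.FS k)) (fun m => H _)).
  specialize (H Fin.F1). lia.
Qed.

Lemma sumFinZ_add d (f g : Fin.t d -> Z) :
  sumFinZ d (fun m => f m + g m)%Z = (sumFinZ d f + sumFinZ d g)%Z.
Proof.
  induction d; simpl; [lia|].
  rewrite (IHd (fun k => f (Fin.FS k)) (fun k => g (Fin.FS k))). lia.
Qed.

Lemma sumFinZ_nonneg d (f : Fin.t d -> Z) :
  (forall m, (0 <= f m)%Z) -> (0 <= sumFinZ d f)%Z.
Proof.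
  intros H. pose proof (sumFinZ_le d (fun _ => 0%Z) f H).
  assert (sumFinZ d (fun _ => 0%Z) = 0%Z) by (clear; induction d; simpl; auto). lia.
Qed.

Lemma sumFinZ_ge_term d (f : Fin.t d -> Z) m :
  (forall m, (0 <= f m)%Z) -> (f m <= sumFinZ d f)%Z.
Proof.
  induction d; intros H; [inversion m|].
  pattern m; apply (Fin.caseS' m); simpl.
  - pose proof (sumFinZ_nonneg d (fun k => f (Fin.FS k)) (fun k => H _)). lia.
  - intros p. pose proof (IHd (fun k => f (Fin.FS k)) p (fun k => H _)).
    specialize (H Fin.F1). simpl in *. lia.
Qed.

Definition z0 {d} : Zd d := fun _ => 0%Z.

Lemma zeq d (a b : Zd d) : (forall m, a m = b m) -> a = b.
Proof. intros; apply functional_extensionality; auto. Qed.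

Lemma norm1_nonneg d (v : Zd d) : (0 <= norm1 v)%Z.
Proof. apply sumFinZ_nonneg; intros; lia. Qed.

Lemma norm1_coord d (v : Zd d) m : (Z.abs (v m) <= norm1 v)%Z.
Proof. apply (sumFinZ_ge_term d (fun m => Z.abs (v m))); intros; lia. Qed.

Lemma norm1_tri d (a b : Zd d) : (norm1 (zadd a b) <= norm1 a + norm1 b)%Z.
Proof.
  unfold norm1, zadd. rewrite <- sumFinZ_add.
  apply sumFinZ_le. intros; apply Z.abs_triangle.
Qed.

Lemma norm1_sub_sym d (a b : Zd d) : norm1 (zsub a b) = norm1 (zsub b a).
Proof.
  unfold norm1, zsub. apply sumFinZ_ext. intros.
  rewrite <- Z.abs_opp. f_equal. lia.
Qed.

Lemma norm1_tri_sub d (a b c : Zd d) :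
  (norm1 (zsub a c) <= norm1 (zsub a b) + norm1 (zsub b c))%Z.
Proof.
  replace (zsub a c) with (zadd (zsub a b) (zsub b c)); [apply norm1_tri|].
  apply zeq; intros; unfold zadd, zsub; lia.
Qed.

Lemma norm1_z0 d : norm1 (@z0 d) = 0%Z.
Proof. unfold norm1, z0. induction d; simpl; auto. Qed.

Lemma zsub_diag d (i : Zd d) : zsub i i = z0.
Proof. apply zeq; intros; unfold zsub, z0; lia. Qed.

Lemma zsub_z0 d (v : Zd d) : zsub v z0 = v.
Proof. apply zeq; intros; unfold zsub, z0; lia. Qed.

Lemma norm1_zero_eq d (i k : Zd d) : norm1 (zsub i k) = 0%Z -> i = k.
Proof.
  intros H. apply zeq; intros m. pose proof (norm1_coord d (zsub i k) m).
  unfold zsub in *. lia.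
Qed.

Lemma fcons_eta d (v : Zd (S d)) : v = fcons (v Fin.F1) (fun k => v (Fin.FS k)).
Proof. apply zeq. intros m; pattern m; apply (Fin.caseS' m); reflexivity. Qed.

Lemma zrange_in N a : (Z.abs a <= Z.of_nat N)%Z -> In a (zrange N).
Proof.
  intros H. unfold zrange. apply in_map_iff. exists (Z.to_nat (a + Z.of_nat N)). split.
  - rewrite Z2Nat.id; lia.
  - apply in_seq. lia.
Qed.

Lemma cube_in d N (v : Zd d) : (forall m, (Z.abs (v m) <= Z.of_nat N)%Z) -> In v (cube d N).
Proof.
  revert v; induction d; intros v H; simpl.
  - left. apply zeq. intros m; inversion m.
  - apply in_flat_map. exists (v Fin.F1). split; [apply zrange_in; auto|].
    apply in_map_iff. exists (fun k => v (Fin.FS k)). split; [symmetry; apply fcons_eta|].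
    apply IHd. intros; apply H.
Qed.

Lemma zadd_sub d (i m : Zd d) : zadd i (zsub m i) = m.
Proof. apply zeq; intros; unfold zadd, zsub; lia. Qed.

Lemma zsub_add d (i v : Zd d) : zsub (zadd i v) i = v.
Proof. apply zeq; intros; unfold zadd, zsub; lia. Qed.

Lemma ball_in d (i m : Zd d) r : IZR (norm1 (zsub m i)) <= r -> In m (ball i r).
Proof.
  intros H. unfold ball. apply in_map_iff. exists (zsub m i). split; [apply zadd_sub|].
  apply filter_In. split.
  - apply cube_in. intros k. pose proof (norm1_coord d (zsub m i) k).
    destruct (archimed r) as [H1 _].
    assert (IZR (norm1 (zsub m i)) < IZR (up r)) by lra. apply lt_IZR in H2.
    rewrite Z2Nat.id; lia.
  - destruct (Rle_dec _ r); auto.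
Qed.

Lemma ball_sound d (i m : Zd d) r : In m (ball i r) -> IZR (norm1 (zsub m i)) <= r.
Proof.
  unfold ball. intros H. apply in_map_iff in H as [v [<- Hv]].
  apply filter_In in Hv as [_ Hv]. rewrite zsub_add.
  destruct (Rle_dec _ r); auto; discriminate.
Qed.

Lemma ball_length d (i j : Zd d) r : length (ball i r) = length (ball j r).
Proof. unfold ball. rewrite !length_map. auto. Qed.

Lemma unit_step d (v : Zd d) n : norm1 v = Z.of_nat (S n) ->
  exists e : Zd d, norm1 e = 1%Z /\ norm1 (zsub v e) = Z.of_nat n.
Proof.
  revert v n; induction d; intros v n H.
  - unfold norm1 in H; simpl in H; lia.
  - change (norm1 v) with (Z.abs (v Fin.F1) + norm1 (fun k => v (Fin.FS k)))%Z in H.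
    destruct (Z.eq_dec (v Fin.F1) 0) as [E|E].
    + rewrite E in H. destruct (IHd (fun k => v (Fin.FS k)) n H) as [e [He1 He2]].
      exists (fcons 0%Z e). split; [exact He1|].
      change (Z.abs (v Fin.F1 - 0) + norm1 (zsub (fun k => v (Fin.FS k)) e) = Z.of_nat n)%Z.
      rewrite E, He2. reflexivity.
    + exists (fcons (Z.sgn (v Fin.F1)) z0). split.
      * change (Z.abs (Z.sgn (v Fin.F1)) + norm1 (@z0 d) = 1)%Z.
        rewrite norm1_z0. destruct (v Fin.F1); simpl; lia.
      * change (Z.abs (v Fin.F1 - Z.sgn (v Fin.F1))
                + norm1 (zsub (fun k => v (Fin.FS k)) z0) = Z.of_nat n)%Z.
        rewrite zsub_z0. rewrite Nat2Z.inj_succ in H.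
        destruct (Z.sgn_spec (v Fin.F1)) as [[? ->]|[[? ->]|[? ->]]]; lia.
Qed.

Lemma path_step d (i k : Zd d) n : norm1 (zsub i k) = Z.of_nat (S n) ->
  exists j, norm1 (zsub i j) = 1%Z /\ norm1 (zsub j k) = Z.of_nat n.
Proof.
  intros H. destruct (unit_step d _ n H) as [e [H1 H2]]. exists (zsub i e). split.
  - replace (zsub i (zsub i e)) with e; auto. apply zeq; intros; unfold zsub; lia.
  - rewrite <- H2. f_equal. apply zeq; intros; unfold zsub; lia.
Qed.

Lemma Rabs_le_inv (a b : R) : Rabs a <= b -> - b <= a <= b.
Proof. unfold Rabs. destruct (Rcase_abs a); lra. Qed.

Lemma dpl_ext (f g : R -> R) x l :
  (forall h, f h = g h) -> derivable_pt_lim f x l -> derivable_pt_lim g x l.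
Proof. intros H. replace g with f; auto. apply functional_extensionality; auto. Qed.

Lemma dpl_shift (f : R -> R) x l :
  derivable_pt_lim (fun h => f (x + h)) 0 l -> derivable_pt_lim f x l.
Proof.
  intros H eps Heps. destruct (H eps Heps) as [del Hd]. exists del. intros h Hh1 Hh2.
  specialize (Hd h Hh1 Hh2). rewrite Rplus_0_l, Rplus_0_r in Hd. exact Hd.
Qed.

Lemma MVT2 (f f' : R -> R) a b : (forall c, derivable_pt_lim f c (f' c)) ->
  exists c, Rabs (c - a) <= Rabs (b - a) /\ (Rmin a b <= c <= Rmax a b) /\
            f b - f a = f' c * (b - a).
Proof.
  intros H. destruct (Rtotal_order a b) as [Hab|[Hab|Hab]].
  - destruct (MVT_cor2 f f' a b Hab (fun c _ => H c)) as [c [Hc1 Hc2]]. exists c.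
    rewrite Rmin_left, Rmax_right by lra. rewrite !Rabs_right by lra. split; [lra|split; [lra|auto]].
  - subst. exists b. rewrite Rmin_left, Rmax_left by lra.
    rewrite Rminus_diag, Rabs_R0. split; [lra|split; [lra|ring]].
  - destruct (MVT_cor2 f f' b a Hab (fun c _ => H c)) as [c [Hc1 Hc2]]. exists c.
    rewrite Rmin_right, Rmax_left by lra. rewrite !Rabs_left by lra. split; [lra|split; lra].
Qed.

Lemma deriv_lower (f f' : R -> R) a b m : a <= b ->
  (forall c, a <= c <= b -> derivable_pt_lim f c (f' c)) ->
  (forall c, a <= c <= b -> m <= f' c) -> f b - f a >= m * (b - a).
Proof.
  intros Hab H Hm. destruct (Req_dec a b); [subst; lra|].
  destruct (MVT_cor2 f f' a b ltac:(lra) H) as [c [Hc1 Hc2]]. rewrite Hc1.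
  apply Rle_ge, Rmult_le_compat_r; [lra|]. apply Hm; lra.
Qed.

Lemma exp_mono x y : x <= y -> exp x <= exp y.
Proof. intros H. destruct (Req_dec x y); [subst; lra|]. left; apply exp_increasing; lra. Qed.

Lemma exp_lin a t : derivable_pt_lim (fun s => exp (a * s)) t (a * exp (a * t)).
Proof.
  pose proof (derivable_pt_lim_comp (mult_real_fct a id) exp t (a * 1) (exp (a * t))
    (derivable_pt_lim_scal id a t 1 (derivable_pt_lim_id t)) (derivable_pt_lim_exp _)) as H.
  replace (a * exp (a * t)) with (exp (mult_real_fct a id t) * (a * 1))
    by (unfold mult_real_fct, id; ring).
  exact H.
Qed.

Lemma geo_zero x a q : 0 <= a -> 0 <= q < 1 -> (forall n, x >= - (a * q ^ n)) -> x >= 0.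
Proof.
  intros Ha Hq H. destruct (Rge_or_gt x 0) as [|Hx]; auto.
  destruct (pow_lt_1_zero q ltac:(rewrite Rabs_right; lra) (- x / (a + 1))) as [N HN].
  { apply Rdiv_lt_0_compat; lra. }
  specialize (HN N (le_n _)). specialize (H N).
  rewrite Rabs_right in HN by (apply Rle_ge, pow_le; lra).
  assert (a * q ^ N <= (a + 1) * q ^ N) by (pose proof (pow_le q N ltac:(lra)); nra).
  assert ((a + 1) * q ^ N < - x).
  { apply Rmult_lt_reg_r with (/ (a + 1)); [apply Rinv_0_lt_compat; lra|].
    replace ((a + 1) * q ^ N * / (a + 1)) with (q ^ N) by (field; lra). exact HN. }
  lra.
Qed.

Lemma large_nat (a : R) : exists n : nat, (1 <= n)%nat /\ a < INR n.
Proof.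
  destruct (archimed (Rabs a)) as [H _]. exists (S (Z.to_nat (up (Rabs a)))). split; [lia|].
  rewrite S_INR, INR_IZR_INZ. pose proof (Rle_abs a).
  destruct (Z_le_gt_dec 0 (up (Rabs a))); [rewrite Z2Nat.id; auto; lra|].
  pose proof (Rabs_pos a). assert (IZR (up (Rabs a)) <= 0) by (apply IZR_le; lia). lra.
Qed.

Definition lsum {A} (L : list A) (f : A -> R) : R := fold_right Rplus 0 (map f L).

Lemma lsum_nil {A} (f : A -> R) : lsum [] f = 0.
Proof. reflexivity. Qed.

Lemma lsum_cons {A} (a : A) L f : lsum (a :: L) f = f a + lsum L f.
Proof. reflexivity. Qed.

Lemma lsum_app {A} (L1 L2 : list A) f : lsum (L1 ++ L2) f = lsum L1 f + lsum L2 f.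
Proof. induction L1; simpl; rewrite ?lsum_nil, ?lsum_cons; [ring|]. rewrite IHL1. ring. Qed.

Lemma lsum_ext {A} (L : list A) f g : (forall x, In x L -> f x = g x) -> lsum L f = lsum L g.
Proof.
  induction L; intros H; rewrite ?lsum_nil, ?lsum_cons; auto.
  f_equal; [apply H; left; auto|apply IHL; intros; apply H; right; auto].
Qed.

Lemma lsum_nonneg {A} (L : list A) f : (forall x, In x L -> 0 <= f x) -> 0 <= lsum L f.
Proof.
  induction L; intros H; rewrite ?lsum_nil, ?lsum_cons; [lra|].
  pose proof (H a (or_introl eq_refl)). pose proof (IHL (fun x Hx => H x (or_intror Hx))). lra.
Qed.

Lemma lsum_le {A} (L : list A) f g : (forall x, In x L -> f x <= g x) -> lsum L f <= lsum L g.
Proof.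
  induction L; intros H; rewrite ?lsum_nil, ?lsum_cons; [lra|].
  pose proof (H a (or_introl eq_refl)). pose proof (IHL (fun x Hx => H x (or_intror Hx))). lra.
Qed.

Lemma lsum_ge_term {A} (L : list A) f x :
  (forall x, In x L -> 0 <= f x) -> In x L -> f x <= lsum L f.
Proof.
  induction L; intros H Hx; [destruct Hx|]. rewrite lsum_cons. destruct Hx as [<-|Hx].
  - pose proof (lsum_nonneg L f (fun x Hx => H x (or_intror Hx))). lra.
  - pose proof (H a (or_introl eq_refl)). pose proof (IHL (fun x Hx => H x (or_intror Hx)) Hx). lra.
Qed.

Lemma lsum_plus {A} (L : list A) f g : lsum L (fun x => f x + g x) = lsum L f + lsum L g.
Proof. induction L; rewrite ?lsum_nil, ?lsum_cons; [lra|]. rewrite IHL. ring. Qed.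

Lemma lsum_minus {A} (L : list A) f g : lsum L f - lsum L g = lsum L (fun x => f x - g x).
Proof. induction L; rewrite ?lsum_nil, ?lsum_cons; [ring|]. rewrite <- IHL. ring. Qed.

Lemma lsum_scal {A} (L : list A) f c : lsum L (fun x => c * f x) = c * lsum L f.
Proof. induction L; rewrite ?lsum_nil, ?lsum_cons; [lra|]. rewrite IHL. ring. Qed.

Lemma lsum_opp {A} (L : list A) f : lsum L (fun x => - f x) = - lsum L f.
Proof. induction L; rewrite ?lsum_nil, ?lsum_cons; [lra|]. rewrite IHL. ring. Qed.

Lemma lsum_abs {A} (L : list A) f : Rabs (lsum L f) <= lsum L (fun x => Rabs (f x)).
Proof.
  induction L; rewrite ?lsum_nil, ?lsum_cons; [rewrite Rabs_R0; lra|].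
  eapply Rle_trans; [apply Rabs_triang|]. lra.
Qed.

Lemma lsum_const {A} (L : list A) c : lsum L (fun _ => c) = INR (length L) * c.
Proof.
  induction L; rewrite ?lsum_nil, ?lsum_cons; simpl; [ring|].
  rewrite IHL. destruct (length L); simpl; ring.
Qed.

Lemma lsum_const_le {A} (L : list A) f c :
  (forall x, In x L -> f x <= c) -> lsum L f <= INR (length L) * c.
Proof. intros H. rewrite <- lsum_const. apply lsum_le. auto. Qed.

Lemma lsum_map {A B} (L : list A) (h : A -> B) g : lsum (map h L) g = lsum L (fun a => g (h a)).
Proof. unfold lsum. rewrite map_map. reflexivity. Qed.

Lemma lsum_flat_map {A B} (L : list A) (f : A -> list B) g :
  lsum (flat_map f L) g = lsum L (fun a => lsum (f a) g).
Proof. induction L; simpl; [reflexivity|]. rewrite lsum_app, lsum_cons, IHL. reflexivity. Qed.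

Lemma split_nodup {A} (L : list A) i : NoDup L -> In i L -> exists L1 L2,
  L = L1 ++ i :: L2 /\ ~ In i (L1 ++ L2) /\ (forall m, In m (L1 ++ L2) -> In m L).
Proof.
  intros ND Hi. destruct (in_split _ _ Hi) as [L1 [L2 ->]]. exists L1, L2.
  split; auto. split; [apply NoDup_remove_2; auto|].
  intros m Hm. apply in_app_or in Hm. apply in_or_app. simpl. tauto.
Qed.

Lemma lsum_mid {A} (L1 L2 : list A) i f : lsum (L1 ++ i :: L2) f = f i + lsum (L1 ++ L2) f.
Proof. rewrite !lsum_app, lsum_cons. ring. Qed.

Lemma nodup_sub_sum {A} (l L : list A) g :
  NoDup l -> (forall x, In x l -> In x L) -> (forall x, 0 <= g x) -> lsum l g <= lsum L g.
Proof.
  revert L. induction l as [|a l IH]; intros L ND Hsub Hg.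
  - rewrite lsum_nil. apply lsum_nonneg; auto.
  - inversion ND; subst. destruct (in_split a L (Hsub a (or_introl eq_refl))) as [L1 [L2 ->]].
    rewrite lsum_cons, lsum_mid. assert (lsum l g <= lsum (L1 ++ L2) g); [|lra].
    apply IH; auto. intros x Hx. assert (x <> a) by (intros ->; auto).
    specialize (Hsub x (or_intror Hx)). apply in_app_or in Hsub. apply in_or_app.
    simpl in Hsub. destruct Hsub as [?|[?|?]]; auto. congruence.
Qed.

Lemma ceq {d} (x y : config d) : (forall i, x i = y i) -> x = y.
Proof. intros; apply functional_extensionality; auto. Qed.

Lemma upd_same {d} (x : config d) i v : upd x i v i = v.
Proof. unfold upd. destruct (excluded_middle_informative (i = i)); congruence. Qed.

Lemma upd_other {d} (x : config d) i k v : k <> i -> upd x i v k = x k.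
Proof. unfold upd. intros; destruct (excluded_middle_informative (k = i)); congruence. Qed.

Lemma upd_upd {d} (x : config d) i v w : upd (upd x i v) i w = upd x i w.
Proof. apply ceq; intros k. unfold upd. destruct (excluded_middle_informative (k = i)); auto. Qed.

Lemma upd_id {d} (x : config d) i : upd x i (x i) = x.
Proof. apply ceq; intros k. unfold upd. destruct (excluded_middle_informative (k = i)); subst; auto. Qed.

Definition lin {d} (z : config d) (h : R) (e : config d) : config d := fun p => z p + h * e p.

Lemma lin_zero {d} (z e : config d) : lin z 0 e = z.
Proof. apply ceq; intros; unfold lin; ring. Qed.

Lemma tau_upd {d} (z : config d) k (l : Z) i h :
  tau k l (upd z (zadd i k) (z (zadd i k) + h)) = upd (tau k l z) i (tau k l z i + h).
Proof.
  apply ceq; intros p. unfold tau, upd.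
  destruct (excluded_middle_informative (zadd p k = zadd i k)) as [E|E],
           (excluded_middle_informative (p = i)); subst; try lra; [|congruence].
  exfalso. apply n. apply zeq. intros m. apply (f_equal (fun f => f m)) in E. unfold zadd in E. lia.
Qed.

(** * Consequences of the standing assumptions (A)-(E) *)

Section Potentials.
Context {d : nat} {S : Zd d -> config d -> R} {dS : Zd d -> Zd d -> config d -> R}
  {ddS : Zd d -> Zd d -> Zd d -> config d -> R} {r : R} (HS : potentials_ok S dS ddS r).

Lemma pot_range_pos : 0 < r.
Proof. apply HS. Qed.

Lemma pot_local : forall j x y,
  (forall k, IZR (norm1 (zsub k j)) <= r -> x k = y k) -> S j x = S j y.
Proof. apply HS. Qed.

Lemma pot_dS : forall j i x, derivable_pt_lim (fun h => S j (upd x i (x i + h))) 0 (dS j i x).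
Proof. apply HS. Qed.

Lemma pot_ddS : forall j i k x,
  derivable_pt_lim (fun h => dS j i (upd x k (x k + h))) 0 (ddS j i k x).
Proof. apply HS. Qed.

Lemma pot_ddS_cont : forall j i k x eps, 0 < eps -> exists del, 0 < del /\
  forall y, (forall m, IZR (norm1 (zsub m j)) <= r -> Rabs (y m - x m) < del) ->
    Rabs (ddS j i k y - ddS j i k x) < eps.
Proof. apply HS. Qed.

Lemma pot_covariant : forall j k (l : Z) x, S j (tau k l x) = S (zadd j k) x.
Proof. apply HS. Qed.

Lemma pot_offdiag_nonpos : forall j i k x, i <> k -> ddS j i k x <= 0.
Proof. apply HS. Qed.

Lemma pot_neighbor_neg : forall i k x, norm1 (zsub i k) = 1%Z -> ddS i i k x < 0.
Proof. apply HS. Qed.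

Lemma pot_bounded : exists C, 0 <= C /\ forall j i k x, Rabs (ddS j i k x) <= C.
Proof.
  destruct HS as [_ [_ [_ [_ [_ [_ [_ [_ [_ [_ [C HC]]]]]]]]]]]. exists C. split; auto.
  pose proof (HC z0 z0 z0 (fun _ => 0)). pose proof (Rabs_pos (ddS z0 z0 z0 (fun _ => 0))). lra.
Qed.

Lemma ddS_at (j i m : Zd d) (w : config d) s0 :
  derivable_pt_lim (fun s => dS j i (upd w m s)) s0 (ddS j i m (upd w m s0)).
Proof.
  apply dpl_shift. eapply dpl_ext; [|apply (pot_ddS j i m (upd w m s0))].
  intros h. simpl. rewrite upd_same, upd_upd. reflexivity.
Qed.

(** The first derivatives inherit locality (A) from the potentials; hence ddS_{j,i,m} = 0 when m
    is out of range, so by (D) neighbours lie within the range r. *)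
Lemma dS_local j i x y :
  (forall k, IZR (norm1 (zsub k j)) <= r -> x k = y k) -> dS j i x = dS j i y.
Proof.
  intros H. eapply uniqueness_limite; [apply (pot_dS j i x)|].
  eapply dpl_ext; [|apply (pot_dS j i y)]. intros h.
  destruct (classic (IZR (norm1 (zsub i j)) <= r)) as [Hi|Hi]; [rewrite (H i Hi)|];
  apply pot_local; intros k Hk; unfold upd;
  destruct (excluded_middle_informative (k = i)); subst; auto; try contradiction;
  symmetry; auto.
Qed.

Lemma ddS_far (j i m : Zd d) (x : config d) : ~ IZR (norm1 (zsub m j)) <= r -> ddS j i m x = 0.
Proof.
  intros Hm. eapply uniqueness_limite; [apply (pot_ddS j i m x)|].
  eapply dpl_ext with (f := fun _ => dS j i x); [|apply derivable_pt_lim_const].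
  intros h. apply dS_local. intros k Hk. unfold upd.
  destruct (excluded_middle_informative (k = m)); subst; [contradiction|auto].
Qed.

Lemma neighbor_in_range (i k : Zd d) : norm1 (zsub i k) = 1%Z -> IZR (norm1 (zsub k i)) <= r.
Proof.
  intros H. apply NNPP. intros Hk.
  pose proof (pot_neighbor_neg i k (fun _ => 0) H). rewrite (ddS_far i i k _ Hk) in H0. lra.
Qed.

Lemma dS_equiv j i k (l : Z) z : dS j i (tau k l z) = dS (zadd j k) (zadd i k) z.
Proof.
  eapply uniqueness_limite; [apply (pot_dS j i (tau k l z))|].
  eapply dpl_ext; [|apply (pot_dS (zadd j k) (zadd i k) z)]. intros h. simpl.
  rewrite <- pot_covariant with (l := l), tau_upd. reflexivity.
Qed.

Lemma ddS_equiv j i m k (l : Z) z : ddS j i m (tau k l z) = ddS (zadd j k) (zadd i k) (zadd m k) z.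
Proof.
  eapply uniqueness_limite; [apply (pot_ddS j i m (tau k l z))|].
  eapply dpl_ext; [|apply (pot_ddS (zadd j k) (zadd i k) (zadd m k) z)]. intros h. simpl.
  rewrite <- dS_equiv with (l := l), tau_upd. reflexivity.
Qed.

(** Directional derivative of dS in direction e, one coordinate at a time: switching on the
    m-th component of a bounded direction contributes ddS_m * e_m.  Uses continuity of ddS. *)
Lemma dS_coordinate_increment j i m (z e : config d) E : 0 < E -> (forall p, Rabs (e p) <= E) ->
  derivable_pt_lim (fun h => dS j i (lin z h e) - dS j i (lin z h (upd e m 0))) 0
    (ddS j i m z * e m).
Proof.
  intros HE0 HE eps Heps. set (e2 := upd e m 0). set (A := Rabs (e m) + 1).
  assert (HA : 0 < A) by (unfold A; pose proof (Rabs_pos (e m)); lra).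
  destruct (pot_ddS_cont j i m z (eps / A)) as [del0 [Hdel0 Hc]]; [apply Rdiv_lt_0_compat; lra|].
  assert (Hdp : 0 < del0 / E) by (apply Rdiv_lt_0_compat; lra).
  exists (mkposreal _ Hdp). intros h Hh0 Hh. simpl in Hh.
  assert (HhE : Rabs h * E < del0).
  { apply Rmult_lt_reg_r with (/ E); [apply Rinv_0_lt_compat; lra|].
    rewrite Rmult_assoc, Rinv_r, Rmult_1_r by lra. exact Hh. }
  assert (Hsmall : forall p, Rabs (h * e p) < del0).
  { intros p. rewrite Rabs_mult. pose proof (HE p). pose proof (Rabs_pos h).
    assert (Rabs h * Rabs (e p) <= Rabs h * E) by (apply Rmult_le_compat_l; lra). lra. }
  set (w := lin z h e2).
  assert (Hwm : w m = z m) by (unfold w, lin, e2; rewrite upd_same; ring).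
  assert (Hew : lin z h e = upd w m (z m + h * e m)).
  { apply ceq; intros p. unfold upd, w, lin, e2.
    destruct (excluded_middle_informative (p = m)); subst; auto. rewrite upd_other; auto. }
  destruct (MVT2 (fun s => dS j i (upd w m s)) (fun s => ddS j i m (upd w m s))
              (z m) (z m + h * e m) (ddS_at j i m w)) as [c [Hc1 [_ Hc3]]].
  simpl in Hc3. rewrite <- Hwm, upd_id, Hwm in Hc3. rewrite <- Hew in Hc3.
  rewrite Rplus_0_l, !lin_zero, Rminus_diag, Rminus_0_r. fold e2 w.
  replace ((dS j i (lin z h e) - dS j i w) / h - ddS j i m z * e m)
    with ((ddS j i m (upd w m c) - ddS j i m z) * e m) by (rewrite Hc3; field; auto).
  assert (Hclose : Rabs (ddS j i m (upd w m c) - ddS j i m z) < eps / A).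
  { apply Hc. intros p _. unfold upd. destruct (excluded_middle_informative (p = m)).
    - subst. replace (z m + h * e m - z m) with (h * e m) in Hc1 by ring.
      pose proof (Hsmall m). lra.
    - unfold w, lin, e2. rewrite upd_other; auto.
      replace (z p + h * e p - z p) with (h * e p) by ring. apply Hsmall. }
  rewrite Rabs_mult. apply Rle_lt_trans with (eps / A * Rabs (e m)).
  - apply Rmult_le_compat_r; [apply Rabs_pos|lra].
  - apply Rmult_lt_reg_r with A; auto. unfold Rdiv.
    replace (eps * / A * Rabs (e m) * A) with (eps * Rabs (e m)) by (field; lra).
    unfold A. pose proof (Rabs_pos (e m)). nra.
Qed.

Lemma chain_list j i (L : list (Zd d)) : NoDup L -> forall z e,
  (forall p, ~ In p L -> e p = 0) ->
  derivable_pt_lim (fun h => dS j i (lin z h e)) 0 (lsum L (fun m => ddS j i m z * e m)).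
Proof.
  induction L as [|m L IH]; intros ND z e He.
  - rewrite lsum_nil. eapply dpl_ext with (f := fun _ => dS j i z); [|apply derivable_pt_lim_const].
    intros h. f_equal. apply ceq. intros p. unfold lin. rewrite He; [ring|auto].
  - inversion ND as [|? ? Hm ND']; subst. set (e2 := upd e m 0).
    assert (He2 : forall p, ~ In p L -> e2 p = 0).
    { intros p Hp. unfold e2, upd. destruct (excluded_middle_informative (p = m)); auto.
      apply He. intros [?|?]; [congruence|auto]. }
    specialize (IH ND' z e2 He2).
    rewrite (lsum_ext L _ (fun m0 => ddS j i m0 z * e m0)) in IH
      by (intros p Hp; unfold e2; rewrite upd_other; auto; intros ->; auto).
    set (E := 1 + lsum (m :: L) (fun p => Rabs (e p))).
    pose proof (lsum_nonneg (m :: L) (fun p => Rabs (e p)) (fun _ _ => Rabs_pos _)) as Hsum.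
    assert (HE0 : 0 < E) by (unfold E; lra).
    assert (HE : forall p, Rabs (e p) <= E).
    { intros p. destruct (classic (In p (m :: L))) as [Hp|Hp].
      - pose proof (lsum_ge_term (m :: L) (fun p => Rabs (e p)) p (fun _ _ => Rabs_pos _) Hp).
        unfold E. lra.
      - rewrite He, Rabs_R0 by auto. lra. }
    pose proof (derivable_pt_lim_plus _ _ _ _ _ (dS_coordinate_increment j i m z e E HE0 HE) IH) as Hp.
    rewrite lsum_cons. eapply dpl_ext; [|exact Hp]. intros h. unfold plus_fct, e2. ring.
Qed.

End Potentials.

(** * Differences of grad W via the mean value theorem *)

Lemma coop_row_lower {A} (L : list A) (dd U : A -> R) i C beta : NoDup L -> In i L ->
  (forall m, In m L -> m <> i -> dd m <= 0) -> (forall m, Rabs (dd m) <= C) ->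
  (forall m, In m L -> U m >= - beta) -> 0 <= beta -> 0 <= C ->
  - lsum L (fun m => dd m * U m) + C * U i >= - (2 + INR (length L)) * C * beta.
Proof.
  intros ND Hi Hdd HC HU Hb HC0.
  destruct (split_nodup L i ND Hi) as [L1 [L2 [-> [Hni Hsub]]]]. rewrite lsum_mid.
  assert (H1 : lsum (L1 ++ L2) (fun m => dd m * U m) <= INR (length (L1 ++ L2)) * (C * beta)).
  { apply lsum_const_le. intros m Hm. assert (m <> i) by (intros ->; auto).
    specialize (Hdd m (Hsub m Hm) H). specialize (HU m (Hsub m Hm)). specialize (HC m).
    apply Rabs_le_inv in HC. nra. }
  assert (H2 : (C - dd i) * U i >= - 2 * C * beta).
  { specialize (HU i Hi). specialize (HC i). apply Rabs_le_inv in HC. nra. }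
  rewrite !length_app in *. simpl.
  assert (INR (length L1 + length L2) <= INR (length L1 + S (length L2))) by (apply le_INR; lia).
  pose proof (pos_INR (length L1 + length L2)). assert (0 <= C * beta) by nra. nra.
Qed.

Lemma coop_row_neighbor {A} (L : list A) (dd U : A -> R) i k C c :
  NoDup L -> In i L -> In k L -> k <> i ->
  (forall m, In m L -> m <> i -> dd m <= 0) -> (forall m, Rabs (dd m) <= C) ->
  (forall m, In m L -> U m >= 0) -> dd k <= - c ->
  - lsum L (fun m => dd m * U m) + C * U i >= c * U k.
Proof.
  intros ND Hi Hk Hki Hdd HC HU Hc.
  destruct (split_nodup L i ND Hi) as [L1 [L2 [-> [Hni Hsub]]]]. rewrite lsum_mid.
  assert (Hk' : In k (L1 ++ L2)).
  { apply in_app_or in Hk. simpl in Hk. apply in_or_app. destruct Hk as [?|[?|?]]; auto. congruence. }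
  assert (H1 : lsum (L1 ++ L2) (fun m => - (dd m * U m)) >= - (dd k * U k)).
  { apply Rle_ge, (lsum_ge_term _ (fun m => - (dd m * U m))); auto.
    intros m Hm. assert (m <> i) by (intros ->; auto).
    specialize (Hdd m (Hsub m Hm) H). specialize (HU m (Hsub m Hm)). nra. }
  rewrite lsum_opp in H1.
  assert (H2 : (C - dd i) * U i >= 0).
  { specialize (HU i Hi). specialize (HC i). apply Rabs_le_inv in HC. nra. }
  specialize (HU k (Hsub k Hk')). nra.
Qed.

Section GradientDifferences.
Context {d : nat} {S : Zd d -> config d -> R} {dS : Zd d -> Zd d -> config d -> R}
  {ddS : Zd d -> Zd d -> Zd d -> config d -> R} {r : R} (HS : potentials_ok S dS ddS r).

Definition zdec (a b : Zd d) : {a = b} + {a <> b} := excluded_middle_informative (a = b).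

Definition range_list (j : Zd d) : list (Zd d) := nodup zdec (ball j r).

Lemma range_list_in j m : In m (range_list j) <-> IZR (norm1 (zsub m j)) <= r.
Proof. unfold range_list. rewrite nodup_In. split; [apply ball_sound|apply ball_in]. Qed.

Lemma range_list_nodup j : NoDup (range_list j).
Proof. apply NoDup_nodup. Qed.

(** The number of sites in an interaction ball (independent of the centre). *)
Definition ball_size : R := INR (length (ball (@z0 d) r)).

Lemma ball_size_nonneg : 0 <= ball_size.
Proof. apply pos_INR. Qed.

Lemma range_list_length j : INR (length (range_list j)) <= ball_size.
Proof.
  apply le_INR. unfold range_list. rewrite (ball_length d z0 j r).
  apply NoDup_incl_length; [apply NoDup_nodup|]. intros x. rewrite nodup_In. auto.
Qed.

Lemma dS_mean_value j i (a b : config d) : exists th, 0 <= th <= 1 /\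
  dS j i b - dS j i a
  = lsum (range_list j) (fun m => ddS j i m (lin a th (fun p => b p - a p)) * (b m - a m)).
Proof.
  set (D := fun p => b p - a p).
  assert (Hline : forall z e, derivable_pt_lim (fun h => dS j i (lin z h e)) 0
                    (lsum (range_list j) (fun m => ddS j i m z * e m))).
  { intros z e. set (e' := fun p => if excluded_middle_informative (In p (range_list j)) then e p else 0).
    assert (He' : forall p, ~ In p (range_list j) -> e' p = 0).
    { intros p Hp. unfold e'. destruct (excluded_middle_informative _); tauto. }
    pose proof (chain_list HS j i (range_list j) (range_list_nodup j) z e' He') as H.
    rewrite (lsum_ext _ _ (fun m => ddS j i m z * e m)) in H
      by (intros p Hp; unfold e'; destruct (excluded_middle_informative _); tauto).
    eapply dpl_ext; [|exact H]. intros h. simpl. apply (dS_local HS). intros k Hk.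
    apply range_list_in in Hk. unfold lin, e'. destruct (excluded_middle_informative _); tauto. }
  destruct (MVT2 (fun th => dS j i (lin a th D))
              (fun th => lsum (range_list j) (fun m => ddS j i m (lin a th D) * D m)) 0 1)
    as [c [_ [Hc2 Hc3]]].
  { intros c. apply dpl_shift. eapply dpl_ext; [|apply (Hline (lin a c D) D)].
    intros h. cbv beta. f_equal. apply ceq. intros p. unfold lin. ring. }
  exists c. rewrite Rmin_left, Rmax_right in Hc2 by lra. split; auto.
  replace (lin a 1 D) with b in Hc3 by (apply ceq; intros; unfold lin, D; ring).
  rewrite lin_zero in Hc3. rewrite Hc3. unfold D. ring.
Qed.

Lemma gradW_diff (a b : config d) i :
  gradW dS r b i - gradW dS r a i = lsum (ball i r) (fun j => dS j i b - dS j i a).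
Proof. unfold gradW. apply lsum_minus. Qed.

Lemma in_ball_self (i : Zd d) : In i (ball i r).
Proof. apply ball_in. rewrite zsub_diag, norm1_z0. pose proof pot_range_pos HS. simpl. lra. Qed.

Lemma two_step (i j m : Zd d) : IZR (norm1 (zsub j i)) <= r -> IZR (norm1 (zsub m j)) <= r ->
  IZR (norm1 (zsub m i)) <= 2 * r.
Proof.
  intros H1 H2. pose proof (norm1_tri_sub d m j i). apply IZR_le in H. rewrite plus_IZR in H. lra.
Qed.

Variable C : R.
Hypothesis HC0 : 0 <= C.
Hypothesis HC : forall j i k x, Rabs (ddS j i k x) <= C.

Lemma gradW_diff_lower (a b : config d) i beta : 0 <= beta ->
  (forall m, IZR (norm1 (zsub m i)) <= 2 * r -> b m - a m >= - beta) ->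
  - (gradW dS r b i - gradW dS r a i) + (ball_size * C) * (b i - a i)
  >= - (ball_size * (2 + ball_size) * C) * beta.
Proof.
  intros Hb HU. rewrite gradW_diff.
  assert (Hj : forall j, In j (ball i r) ->
            - (dS j i b - dS j i a) + C * (b i - a i) >= - ((2 + ball_size) * C * beta)).
  { intros j Hj. apply ball_sound in Hj. destruct (dS_mean_value j i a b) as [th [_ ->]].
    eapply Rge_trans.
    - apply (coop_row_lower (range_list j) (fun m => ddS j i m (lin a th (fun p => b p - a p)))
               (fun m => b m - a m) i C beta); auto.
      + apply range_list_nodup.
      + apply range_list_in. rewrite norm1_sub_sym; auto.
      + intros m _ Hm. apply (pot_offdiag_nonpos HS). auto.
      + intros m Hm. apply range_list_in in Hm. apply HU. eapply two_step; eauto.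
    - pose proof (range_list_length j). assert (0 <= C * beta) by nra. nra. }
  pose proof (lsum_le (ball i r) (fun _ => - ((2 + ball_size) * C * beta))
    (fun j => - (dS j i b - dS j i a) + C * (b i - a i)) (fun j Hj0 => Rge_le _ _ (Hj j Hj0))) as H.
  rewrite lsum_const, lsum_plus, lsum_const, lsum_opp in H.
  unfold ball_size in *. rewrite (ball_length d z0 i r) in *. lra.
Qed.

Lemma gradW_diff_ordered (a b : config d) i : (forall m, a m <= b m) ->
  - (gradW dS r b i - gradW dS r a i) + (ball_size * C) * (b i - a i) >= 0.
Proof.
  intros Hab. pose proof (gradW_diff_lower a b i 0 (Rle_refl 0)
    (fun m _ => ltac:(specialize (Hab m); lra))). lra.
Qed.

Lemma gradW_diff_neighbor (a b : config d) i k c : norm1 (zsub i k) = 1%Z ->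
  (forall m, IZR (norm1 (zsub m i)) <= 2 * r -> b m - a m >= 0) ->
  (forall th, 0 <= th <= 1 -> ddS i i k (lin a th (fun p => b p - a p)) <= - c) ->
  - (gradW dS r b i - gradW dS r a i) + (ball_size * C) * (b i - a i) >= c * (b k - a k).
Proof.
  intros Hik HU Hc. rewrite gradW_diff.
  assert (Hki : k <> i).
  { intros ->. rewrite zsub_diag, norm1_z0 in Hik. discriminate. }
  assert (Hr : IZR (norm1 (zsub i i)) <= r).
  { rewrite zsub_diag, norm1_z0. pose proof (pot_range_pos HS). simpl; lra. }
  assert (Hj : forall j, In j (ball i r) -> - (dS j i b - dS j i a) + C * (b i - a i) >= 0).
  { intros j Hj. apply ball_sound in Hj. destruct (dS_mean_value j i a b) as [th [_ ->]].
    apply Rge_trans with (- (2 + INR (length (range_list j))) * C * 0); [|right; ring].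
    apply (coop_row_lower (range_list j) (fun m => ddS j i m (lin a th (fun p => b p - a p)))
             (fun m => b m - a m) i C 0); auto; try lra.
    - apply range_list_nodup.
    - apply range_list_in. rewrite norm1_sub_sym; auto.
    - intros m _ Hm. apply (pot_offdiag_nonpos HS). auto.
    - intros m Hm. apply range_list_in in Hm. rewrite Ropp_0. apply HU. eapply two_step; eauto. }
  assert (Hii : - (dS i i b - dS i i a) + C * (b i - a i) >= c * (b k - a k)).
  { destruct (dS_mean_value i i a b) as [th [Hth0 ->]].
    apply (coop_row_neighbor (range_list i) (fun m => ddS i i m (lin a th (fun p => b p - a p)))
             (fun m => b m - a m) i k C c); auto.
    - apply range_list_nodup.
    - apply range_list_in; auto.
    - apply range_list_in, (neighbor_in_range HS); auto.
    - intros m _ Hm. apply (pot_offdiag_nonpos HS). auto.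
    - intros m Hm. apply range_list_in in Hm. apply HU, (two_step i i m); auto. }
  pose proof (lsum_ge_term (ball i r) (fun j => - (dS j i b - dS j i a) + C * (b i - a i)) i
    (fun j Hj0 => Rge_le _ _ (Hj j Hj0)) (in_ball_self i)) as H.
  rewrite lsum_plus, lsum_const, lsum_opp in H.
  unfold ball_size. rewrite (ball_length d z0 i r). lra.
Qed.

End GradientDifferences.

(** * The comparison principle *)

(** The weight 2^||i|| dual to the norm of X. *)
Definition w2 {d} (i : Zd d) : R := 2 ^ (Z.to_nat (norm1 i)).

Lemma w2_ge1 {d} (i : Zd d) : 1 <= w2 i.
Proof. unfold w2. rewrite <- (pow1 (Z.to_nat (norm1 i))). apply pow_incr. lra. Qed.

Lemma w2_add {d} (a b : Zd d) : w2 (zadd a b) <= w2 a * w2 b.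
Proof.
  unfold w2. rewrite <- pow_add. apply Rle_pow; [lra|].
  pose proof (norm1_tri d a b). pose proof (norm1_nonneg d a). pose proof (norm1_nonneg d b).
  pose proof (norm1_nonneg d (zadd a b)). lia.
Qed.

Definition range2 (r : R) : nat := Z.to_nat (up (2 * r)).

Lemma w2_near {d} (m p : Zd d) r : IZR (norm1 (zsub m p)) <= 2 * r -> w2 m <= w2 p * 2 ^ range2 r.
Proof.
  intros Hm. unfold w2. rewrite <- pow_add. apply Rle_pow; [lra|].
  pose proof (norm1_tri_sub d m p z0). rewrite !zsub_z0 in H.
  destruct (archimed (2 * r)) as [H1 _].
  assert (IZR (norm1 (zsub m p)) < IZR (up (2 * r))) by lra. apply lt_IZR in H0.
  pose proof (norm1_nonneg d m). pose proof (norm1_nonneg d p).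
  pose proof (norm1_nonneg d (zsub m p)). unfold range2. lia.
Qed.

Section Comparison.
Context {d : nat} {S : Zd d -> config d -> R} {dS : Zd d -> Zd d -> config d -> R}
  {ddS : Zd d -> Zd d -> Zd d -> config d -> R} {r : R} (HS : potentials_ok S dS ddS r).
Local Notation NB := (ball_size (d := d) (r := r)).

Definition csol (v : R -> config d) : Prop :=
  forall i s, derivable_pt_lim (fun s => v s i) s (- gradW dS r (v s) i).

Definition growth_bound (u : R -> config d) (T A : R) : Prop :=
  forall s i, 0 <= s <= T -> Rabs (u s i) <= A * w2 i.

Lemma csol_diff (v w : R -> config d) : csol v -> csol w -> forall p s,
  derivable_pt_lim (fun s => w s p - v s p) s (- (gradW dS r (w s) p - gradW dS r (v s) p)).
Proof.
  intros Hv Hw p s.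
  replace (- (gradW dS r (w s) p - gradW dS r (v s) p))
    with (- gradW dS r (w s) p - - gradW dS r (v s) p) by ring.
  apply (derivable_pt_lim_minus _ _ s _ _ (Hw p s) (Hv p s)).
Qed.

Section ComparisonSteps.
Variable C : R.
Hypothesis HC0 : 0 <= C.
Hypothesis HC : forall j i k x, Rabs (ddS j i k x) <= C.
Variables (v w : R -> config d) (T A : R).
Hypotheses (Hv : csol v) (Hw : csol w) (HA : 0 <= A)
  (Hg : growth_bound (fun s p => w s p - v s p) T A).

(** u = w - v; Ch is the diagonal shift making the linearised system cooperative, Kb bounds
    the loss from the off-diagonal terms on [0,T], and Q also accounts for the weight change
    over the 2r-neighbourhood. *)
Let u s p := w s p - v s p.
Let Ch := NB * C.
Let Kb := exp (Ch * T) * (NB * (2 + NB) * C) + 1.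
Let Q := Kb * 2 ^ range2 r.

Lemma Kb_ge1 : 1 <= Kb.
Proof.
  pose proof (ball_size_nonneg (d := d) (r := r)). pose proof (exp_pos (Ch * T)).
  assert (0 <= NB * (2 + NB) * C) by nra.
  unfold Kb. nra.
Qed.

Lemma Q_ge1 : 1 <= Q.
Proof.
  pose proof Kb_ge1. assert (1 <= 2 ^ range2 r) by (rewrite <- (pow1 (range2 r)); apply pow_incr; lra).
  unfold Q. nra.
Qed.

(** Gronwall-type step: if u >= 0 at s0 and u >= -beta near p on [s0,sg], then
    u_p(sg) >= - Kb beta (sg - s0).  (Differentiate exp(Ch s) u_p(s).) *)
Lemma comparison_gain s0 sg p beta : 0 <= s0 -> s0 <= sg <= T -> 0 <= beta -> u s0 p >= 0 ->
  (forall t m, s0 <= t <= sg -> IZR (norm1 (zsub m p)) <= 2 * r -> u t m >= - beta) ->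
  u sg p >= - (Kb * beta * (sg - s0)).
Proof.
  intros Hs0 Hsg Hbeta Hu0 Hb.
  pose proof (ball_size_nonneg (d := d) (r := r)) as Hnb.
  assert (HCh : 0 <= Ch) by (unfold Ch; nra).
  set (F := fun t => exp (Ch * t) * u t p).
  set (F' := fun t => exp (Ch * t) * (- (gradW dS r (w t) p - gradW dS r (v t) p) + Ch * u t p)).
  assert (HF : forall t, s0 <= t <= sg -> derivable_pt_lim F t (F' t)).
  { intros t _. pose proof (derivable_pt_lim_mult _ _ t _ _ (exp_lin Ch t) (csol_diff v w Hv Hw p t)) as H.
    unfold F, F', u. eapply dpl_ext; [|replace (exp (Ch * t) * _) with
      (Ch * exp (Ch * t) * (w t p - v t p) + exp (Ch * t) * - (gradW dS r (w t) p - gradW dS r (v t) p))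
      by ring; exact H]. intros; reflexivity. }
  assert (HF' : forall t, s0 <= t <= sg -> - (Kb * beta) <= F' t).
  { intros t Ht.
    pose proof (gradW_diff_lower HS C HC0 HC (v t) (w t) p beta Hbeta (fun m Hm => Hb t m Ht Hm)) as HG.
    assert (exp (Ch * t) <= exp (Ch * T)) by (apply exp_mono; nra).
    pose proof (exp_pos (Ch * t)). fold Ch in HG. fold (u t p) in HG.
    set (K0 := NB * (2 + NB) * C) in *.
    assert (0 <= K0 * beta) by (unfold K0; repeat apply Rmult_le_pos; lra).
    assert (exp (Ch * t) * (- K0 * beta) <= F' t)
      by (unfold F'; apply Rmult_le_compat_l; lra).
    assert (exp (Ch * t) * (K0 * beta) <= exp (Ch * T) * (K0 * beta))
      by (apply Rmult_le_compat_r; lra).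
    unfold Kb. lra. }
  pose proof (deriv_lower F F' s0 sg (- (Kb * beta)) ltac:(lra) HF HF') as HD.
  assert (HFs0 : F s0 >= 0) by (unfold F; pose proof (exp_pos (Ch * s0)); nra).
  assert (Hex : 1 <= exp (Ch * sg)) by (rewrite <- exp_0; apply exp_mono; nra).
  pose proof Kb_ge1. unfold F in HD, HFs0.
  destruct (Rge_or_gt (u sg p) 0); [assert (0 <= Kb * beta * (sg - s0)) by (apply Rmult_le_pos; nra); lra|].
  nra.
Qed.

Lemma comparison_iterate s0 : 0 <= s0 <= T -> (forall p, u s0 p >= 0) ->
  forall n sg p, s0 <= sg <= T -> u sg p >= - (A * w2 p * (Q * (sg - s0)) ^ n).
Proof.
  intros Hs0 Hu0. induction n as [|n IH]; intros sg p Hsg.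
  - simpl. specialize (Hg sg p ltac:(lra)). apply Rabs_le_inv in Hg. unfold u. lra.
  - pose proof Q_ge1.
    set (beta := A * w2 p * 2 ^ range2 r * (Q * (sg - s0)) ^ n).
    assert (Hq0 : 0 <= Q * (sg - s0)) by nra.
    pose proof (w2_ge1 p). pose proof (pow_le _ n Hq0). pose proof (pow_le 2 (range2 r) ltac:(lra)).
    assert (Hbeta : 0 <= beta) by (unfold beta; repeat apply Rmult_le_pos; lra).
    pose proof (comparison_gain s0 sg p beta ltac:(lra) ltac:(lra) Hbeta (Hu0 p)) as Hgain.
    replace (A * w2 p * (Q * (sg - s0)) ^ Datatypes.S n) with (Kb * beta * (sg - s0)) by (unfold beta, Q; simpl; ring).
    apply Hgain. intros t m Ht Hm. eapply Rge_trans; [apply IH; lra|].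
    apply Ropp_le_ge_contravar. unfold beta.
    pose proof (w2_near m p r Hm). pose proof (w2_ge1 m).
    assert ((Q * (t - s0)) ^ n <= (Q * (sg - s0)) ^ n) by (apply pow_incr; nra).
    assert (0 <= (Q * (t - s0)) ^ n) by (apply pow_le; nra).
    rewrite !Rmult_assoc. apply Rmult_le_compat_l; auto.
    replace (w2 p * (2 ^ range2 r * (Q * (sg - s0)) ^ n))
      with ((w2 p * 2 ^ range2 r) * (Q * (sg - s0)) ^ n) by ring.
    apply Rmult_le_compat; lra.
Qed.

Lemma comparison_short s0 : 0 <= s0 <= T -> (forall p, u s0 p >= 0) ->
  forall sg p, s0 <= sg <= T -> sg - s0 <= / (2 * Q) -> u sg p >= 0.
Proof.
  intros Hs0 Hu0 sg p Hsg Hsh. pose proof Q_ge1. pose proof (w2_ge1 p).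
  apply (geo_zero _ (A * w2 p) (1/2)); [nra|lra|]. intros n.
  eapply Rge_trans; [apply (comparison_iterate s0 Hs0 Hu0 n sg p Hsg)|].
  apply Ropp_le_ge_contravar, Rmult_le_compat_l; [nra|]. apply pow_incr. split; [nra|].
  apply Rmult_le_reg_r with (2 * / Q); [apply Rmult_lt_0_compat; [lra|apply Rinv_0_lt_compat; lra]|].
  replace (Q * (sg - s0) * (2 * / Q)) with (2 * (sg - s0)) by (field; lra).
  replace (/ (2 * Q)) with (/ 2 * / Q) in Hsh by (field; lra).
  replace (1 / 2 * (2 * / Q)) with (/ Q) by (field; lra). lra.
Qed.

Lemma comparison_interval : (forall p, v 0 p <= w 0 p) ->
  forall s, 0 <= s <= T -> forall p, v s p <= w s p.
Proof.
  intros H0. pose proof Q_ge1. set (h := / (2 * Q)).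
  assert (Hh : 0 < h) by (unfold h; apply Rinv_0_lt_compat; lra).
  assert (Out : forall q : nat, forall sg, 0 <= sg <= T -> sg <= INR q * h -> forall p, u sg p >= 0).
  { induction q as [|q IH]; intros sg Hsg Hq p.
    - simpl in Hq. replace sg with 0 by nra. unfold u. specialize (H0 p). lra.
    - destruct (Rle_or_lt sg (INR q * h)); [apply IH; auto|].
      assert (0 <= INR q * h) by (pose proof (pos_INR q); nra).
      apply (comparison_short (INR q * h)); try lra; [intros p'; apply IH; lra|].
      rewrite S_INR in Hq. unfold h in *. lra. }
  intros s Hs p. destruct (archimed (T / h)) as [Ha _].
  assert (Hup : T <= INR (Z.to_nat (up (T / h))) * h).
  { assert (0 <= T / h) by (unfold Rdiv; apply Rmult_le_pos; [lra|left; apply Rinv_0_lt_compat; lra]).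
    rewrite INR_IZR_INZ, Z2Nat.id by (apply le_IZR; lra).
    apply Rmult_le_reg_r with (/ h); [apply Rinv_0_lt_compat; lra|].
    replace (IZR (up (T / h)) * h * / h) with (IZR (up (T / h))) by (field; lra). unfold Rdiv in Ha. lra. }
  pose proof (Out (Z.to_nat (up (T / h))) s Hs ltac:(lra) p) as Hu. unfold u in Hu. lra.
Qed.

End ComparisonSteps.

Lemma comparison (v w : R -> config d) T A : csol v -> csol w -> 0 <= A ->
  growth_bound (fun s p => w s p - v s p) T A -> (forall p, v 0 p <= w 0 p) ->
  forall s, 0 <= s <= T -> forall p, v s p <= w s p.
Proof.
  intros Hv Hw HA Hg. destruct (pot_bounded HS) as [C [HC0 HC]].
  apply (comparison_interval C HC0 HC v w T A Hv Hw HA Hg).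
Qed.

End Comparison.

(** * A-priori properties of the flow *)

Lemma wnorm_nonneg {d} (z : config d) M : wnorm_le z M -> 0 <= M.
Proof. intros H. specialize (H [] (NoDup_nil _)). simpl in H. lra. Qed.

Lemma wnorm_single {d} (z : config d) eps i : wnorm_le z eps -> Rabs (z i) <= eps * w2 i.
Proof.
  intros H. specialize (H [i] ltac:(constructor; [intros []|constructor])). simpl in H.
  rewrite Rplus_0_r, pow_inv in H. pose proof (w2_ge1 i) as Hw. unfold w2 in *.
  apply Rmult_le_reg_l with (/ 2 ^ Z.to_nat (norm1 i)); [apply Rinv_0_lt_compat; lra|].
  replace (/ 2 ^ Z.to_nat (norm1 i) * (eps * 2 ^ Z.to_nat (norm1 i))) with eps by (field; lra).
  exact H.
Qed.

Section Flow.
Context {d : nat} {S : Zd d -> config d -> R} {dS : Zd d -> Zd d -> config d -> R}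
  {ddS : Zd d -> Zd d -> Zd d -> config d -> R} {r : R} (HS : potentials_ok S dS ddS r).
Local Notation NB := (ball_size (d := d) (r := r)).

(** Convergence in X implies convergence of each coordinate, so flow lines solve the ODE
    componentwise. *)
Lemma flow_csol (Psi : R -> config d -> config d) x : is_flow dS r Psi -> inX x ->
  csol (dS := dS) (r := r) (fun s => Psi s x).
Proof.
  intros HP Hx i t. destruct (HP x Hx) as [_ Ht]. destruct (Ht t) as [_ Hd].
  intros eps Heps. pose proof (w2_ge1 i) as Hw.
  destruct (Hd (eps / 2 / w2 i)) as [del [Hdel Hh]]; [apply Rdiv_lt_0_compat; lra|].
  exists (mkposreal _ Hdel). intros h Hh0 Hh1. specialize (Hh h Hh0 Hh1).
  apply (wnorm_single _ _ i) in Hh. simpl.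
  replace (eps / 2 / w2 i * w2 i) with (eps / 2) in Hh by (field; lra).
  replace ((Psi (t + h) x i - Psi t x i) / h - - gradW dS r (Psi t x) i)
    with ((Psi (t + h) x i - Psi t x i) / h + gradW dS r (Psi t x) i) by ring. lra.
Qed.

Lemma gradW_equiv k (l : Z) (z : config d) i : gradW dS r (tau k l z) i = gradW dS r z (zadd i k).
Proof.
  unfold gradW, ball. rewrite !map_map. f_equal. apply map_ext. intros v.
  rewrite (dS_equiv HS). f_equal. apply zeq; intros; unfold zadd; lia.
Qed.

(** Translates tau_{k,l} of solutions are solutions (covariance (B)). *)
Lemma shift_csol (v : R -> config d) k (l : Z) : csol (dS := dS) (r := r) v ->
  csol (dS := dS) (r := r) (fun s => tau k l (v s)).
Proof.
  intros Hv i s. rewrite gradW_equiv. unfold tau.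
  replace (- gradW dS r (v s) (zadd i k)) with (- gradW dS r (v s) (zadd i k) + 0) by ring.
  apply (derivable_pt_lim_plus _ _ s _ _ (Hv (zadd i k) s) (derivable_pt_lim_const (IZR l) s)).
Qed.

Lemma gradW_bound (z : config d) M : 0 <= M -> (forall m, Rabs (z m) <= M * w2 m) ->
  exists G, 0 <= G /\ forall i, Rabs (gradW dS r z i) <= G * w2 i.
Proof.
  intros HM Hz. destruct (pot_bounded HS) as [C [HC0 HC]].
  set (zero := fun _ : Zd d => 0).
  set (G0 := lsum (ball (@z0 d) r) (fun v => Rabs (dS z0 v zero))).
  set (B := G0 + NB * C * M * 2 ^ range2 r).
  pose proof (ball_size_nonneg (d := d) (r := r)) as Hnb.
  assert (HG0 : 0 <= G0) by (apply lsum_nonneg; intros; apply Rabs_pos).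
  pose proof (pow_le 2 (range2 r) ltac:(lra)).
  assert (HB : 0 <= B) by (unfold B; assert (0 <= NB * C * M)
    by (repeat apply Rmult_le_pos; lra); nra).
  exists (NB * B). split; [nra|]. intros i. pose proof (w2_ge1 i) as Hw.
  unfold gradW. fold (lsum (ball i r) (fun j => dS j i z)).
  eapply Rle_trans; [apply lsum_abs|].
  eapply Rle_trans; [apply (lsum_const_le _ _ (B * w2 i))|].
  - intros j Hj. apply ball_sound in Hj.
    destruct (dS_mean_value HS j i zero z) as [th [_ Hth]].
    replace (dS j i z) with (dS j i zero + (dS j i z - dS j i zero)) by ring. rewrite Hth.
    eapply Rle_trans; [apply Rabs_triang|].
    assert (H1 : Rabs (dS j i zero) <= G0).
    { replace (dS j i zero) with (dS z0 (zsub i j) zero).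
      2: { replace zero with (tau j 0 zero) at 1 by (apply ceq; intros; unfold tau, zero; simpl; ring).
           rewrite (dS_equiv HS). f_equal; apply zeq; intros; unfold zadd, zsub, z0; lia. }
      apply (lsum_ge_term _ (fun v => Rabs (dS z0 v zero))); [intros; apply Rabs_pos|].
      apply ball_in. rewrite zsub_z0, norm1_sub_sym; auto. }
    assert (H2 : Rabs (lsum (range_list (r := r) j) (fun m => ddS j i m (lin zero th (fun p => z p - zero p))
                  * (z m - zero m))) <= NB * C * M * 2 ^ range2 r * w2 i).
    { eapply Rle_trans; [apply lsum_abs|].
      eapply Rle_trans; [apply (lsum_const_le _ _ (C * (M * (w2 i * 2 ^ range2 r))))|].
      - intros m Hm. apply range_list_in in Hm. rewrite Rabs_mult. unfold zero. rewrite Rminus_0_r.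
        apply Rmult_le_compat; try apply Rabs_pos; [apply HC|].
        eapply Rle_trans; [apply Hz|]. apply Rmult_le_compat_l; auto.
        apply w2_near. apply (two_step i j m); auto.
      - pose proof (range_list_length (r := r) j).
        assert (0 <= C * (M * (w2 i * 2 ^ range2 r))) by (repeat apply Rmult_le_pos; lra).
        replace (NB * C * M * 2 ^ range2 r * w2 i)
          with (NB * (C * (M * (w2 i * 2 ^ range2 r)))) by ring.
        apply Rmult_le_compat_r; auto. }
    assert (0 <= G0 * (w2 i - 1)) by (apply Rmult_le_pos; lra). unfold B. lra.
  - rewrite (ball_length d i z0 r). unfold ball_size. lra.
Qed.

Lemma local_bound (Psi : R -> config d -> config d) x : is_flow dS r Psi -> inX x -> forall t,
  exists del A, 0 < del /\ 0 <= A /\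
    forall h, Rabs h < del -> forall i, Rabs (Psi (t + h) x i) <= A * w2 i.
Proof.
  intros HP Hx t. destruct (HP x Hx) as [_ Ht]. destruct (Ht t) as [[M HM] Hd].
  pose proof (wnorm_nonneg _ _ HM) as HM0.
  destruct (gradW_bound (Psi t x) M HM0 (fun m => wnorm_single _ _ m HM)) as [G [HG0 Hg]].
  destruct (Hd 1 Rlt_0_1) as [del [Hdel Hh]].
  exists (Rmin del 1), (M + 1 + G). split; [apply Rmin_pos; lra|]. split; [lra|].
  intros h Hh1 i. pose proof (w2_ge1 i) as Hw.
  pose proof (wnorm_single _ _ i HM) as Hi.
  destruct (Req_dec h 0) as [->|Hh0]; [rewrite Rplus_0_r; nra|].
  assert (Hhd : Rabs h < del) by (pose proof (Rmin_l del 1); lra).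
  assert (Hh1' : Rabs h < 1) by (pose proof (Rmin_r del 1); lra).
  specialize (Hh h Hh0 Hhd). apply (wnorm_single _ _ i) in Hh. rewrite Rmult_1_l in Hh.
  specialize (Hg i). set (q := (Psi (t + h) x i - Psi t x i) / h) in *.
  assert (Hq : Rabs q <= w2 i + G * w2 i).
  { replace q with ((q + gradW dS r (Psi t x) i) - gradW dS r (Psi t x) i) by ring.
    eapply Rle_trans; [apply Rabs_triang|]. rewrite Rabs_Ropp. lra. }
  replace (Psi (t + h) x i) with (Psi t x i + h * q) by (unfold q; field; auto).
  eapply Rle_trans; [apply Rabs_triang|]. rewrite Rabs_mult.
  assert (Rabs h * Rabs q <= 1 * (w2 i + G * w2 i)) by (apply Rmult_le_compat; try apply Rabs_pos; lra).
  nra.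
Qed.

(** A-priori growth bound on compact time intervals (continuity argument via sup). *)
Lemma apriori (Psi : R -> config d -> config d) x T : is_flow dS r Psi -> inX x -> 0 <= T ->
  exists A, 0 <= A /\ growth_bound (fun s => Psi s x) T A.
Proof.
  intros HP Hx HT.
  set (P := fun s => exists A, 0 <= A /\ forall tau i, 0 <= tau <= s -> Rabs (Psi tau x i) <= A * w2 i).
  set (E := fun s => 0 <= s <= T /\ P s).
  assert (HE0 : E 0).
  { split; [lra|]. destruct (local_bound Psi x HP Hx 0) as [del [A [Hd [HA Hb]]]].
    exists A. split; auto. intros tau i Ht. replace tau with (0 + 0) by lra.
    apply Hb. rewrite Rabs_R0; lra. }
  destruct (completeness E) as [s [Hub Hlub]]; [exists T; intros y [Hy _]; lra|exists 0; auto|].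
  assert (Hs0 : 0 <= s) by (apply Hub; auto).
  assert (HsT : s <= T) by (apply Hlub; intros y [Hy _]; lra).
  destruct (local_bound Psi x HP Hx s) as [del [As [Hd [HAs Hb]]]].
  destruct (classic (exists s1, E s1 /\ s - del < s1)) as [[s1 [[Hs1 [A1 [HA1 HP1]]] Hs1d]]|Hno].
  2: { exfalso. assert (s <= s - del); [|lra]. apply Hlub. intros y Hy.
       destruct (Rle_or_lt y (s - del)); auto. exfalso; apply Hno; exists y; auto. }
  set (s2 := Rmin T (s + del / 2)).
  assert (HP2 : P s2).
  { exists (A1 + As). split; [lra|]. intros tau i Ht. pose proof (w2_ge1 i).
    destruct (Rle_or_lt tau s1); [specialize (HP1 tau i ltac:(lra)); nra|].
    assert (tau <= s + del / 2) by (pose proof (Rmin_r T (s + del / 2)); unfold s2 in Ht; lra).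
    replace tau with (s + (tau - s)) by ring.
    assert (Hts : Rabs (tau - s) < del) by (unfold Rabs; destruct (Rcase_abs (tau - s)); lra).
    specialize (Hb (tau - s) Hts i). nra. }
  assert (HE2 : E s2) by (split; auto; split; [unfold s2; apply Rmin_glb; lra|apply Rmin_l]).
  specialize (Hub s2 HE2). unfold s2 in Hub. destruct (Rle_dec T (s + del / 2)).
  - replace s2 with T in HP2 by (unfold s2; symmetry; apply Rmin_left; auto).
    destruct HP2 as [A [HA HB]]. exists A. split; auto.
  - rewrite Rmin_right in Hub by lra. lra.
Qed.

End Flow.

(** * Birkhoff configurations *)

Lemma cv_le (a : nat -> R) L c e : Un_cv a L ->
  (forall n, (1 <= n)%nat -> a n <= c + e * / INR n) -> L <= c.
Proof.
  intros Hcv Ha. apply Rnot_lt_le. intros HL.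
  set (eps := (L - c) / 2). assert (Heps : eps > 0) by (unfold eps; lra).
  destruct (Hcv eps Heps) as [N HN].
  destruct (large_nat (Rabs e / eps)) as [n0 [Hn0 Hn0']].
  set (n := max N n0). specialize (HN n ltac:(lia)). specialize (Ha n ltac:(lia)).
  unfold Rdist in HN. apply Rabs_def2 in HN as [HN1 HN2].
  assert (Hnpos : 0 < INR n) by (apply lt_0_INR; lia).
  assert (INR n0 <= INR n) by (apply le_INR; lia).
  assert (e * / INR n < eps).
  { apply Rle_lt_trans with (Rabs e * / INR n);
      [apply Rmult_le_compat_r; [left; apply Rinv_0_lt_compat; auto|apply Rle_abs]|].
    apply Rmult_lt_reg_r with (INR n); auto. rewrite Rmult_assoc, Rinv_l, Rmult_1_r by lra.
    apply Rmult_lt_reg_r with (/ eps); [apply Rinv_0_lt_compat; lra|].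
    replace (eps * INR n * / eps) with (INR n) by (field; lra). unfold Rdiv in Hn0'. lra. }
  unfold eps in *. lra.
Qed.

Lemma cv_ge (a : nat -> R) L c e : Un_cv a L ->
  (forall n, (1 <= n)%nat -> c - e * / INR n <= a n) -> c <= L.
Proof.
  intros Hcv Ha. assert (Hcv' : Un_cv (fun n => - a n) (- L)).
  { intros eps He. destruct (Hcv eps He) as [N HN]. exists N. intros n Hn.
    specialize (HN n Hn). unfold Rdist in *.
    replace (- a n - - L) with (- (a n - L)) by ring. rewrite Rabs_Ropp. auto. }
  pose proof (cv_le _ _ (- c) e Hcv' (fun n Hn => ltac:(specialize (Ha n Hn); lra))). lra.
Qed.

Section Birkhoff.
Context {d : nat}.

Lemma birkhoff_osc (x : config d) v i j : birkhoff x ->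
  (x (zadd i v) - x i) - (x (zadd j v) - x j) <= 1.
Proof.
  intros HB. set (Di := x (zadd i v) - x i). set (Dj := x (zadd j v) - x j).
  apply Rnot_lt_le. intros H.
  destruct (archimed Dj) as [Hn1 Hn2].
  destruct (HB v (- up Dj)%Z) as [Hc|Hc]; [specialize (Hc j)|specialize (Hc i)];
    unfold tau in Hc; rewrite opp_IZR in Hc; unfold Di, Dj in *; lra.
Qed.

Lemma zscale_0 (v : Zd d) : zscale 0 v = z0.
Proof. apply zeq; intros; unfold zscale, z0; simpl; lia. Qed.

Lemma zscale_S (n : nat) (v : Zd d) : zscale (S n) v = zadd (zscale n v) v.
Proof. apply zeq; intros; unfold zscale, zadd; rewrite Nat2Z.inj_succ; lia. Qed.

Lemma rot_bound (x : config d) w v i : birkhoff x -> rot_vector x w ->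
  Rabs (x (zadd i v) - x i - inner w v) <= 1.
Proof.
  intros HB Hrot. set (Di := x (zadd i v) - x i).
  assert (Hosc : forall p, Di - 1 <= x (zadd p v) - x p <= Di + 1).
  { intros p. pose proof (birkhoff_osc x v i p HB). pose proof (birkhoff_osc x v p i HB). unfold Di; lra. }
  assert (Hsum : forall n, INR n * (Di - 1) <= x (zscale n v) - x z0 <= INR n * (Di + 1)).
  { induction n; [rewrite zscale_0; simpl; lra|].
    rewrite zscale_S, S_INR. specialize (Hosc (zscale n v)). lra. }
  specialize (Hrot v).
  assert (H1 : inner w v <= Di + 1).
  { apply (cv_le _ _ _ (x z0) Hrot). intros n Hn. specialize (Hsum n).
    assert (0 < INR n) by (apply lt_0_INR; lia). unfold Rdiv.
    apply Rmult_le_reg_r with (INR n); auto. rewrite Rmult_assoc, Rinv_l by lra.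
    replace ((Di + 1 + x z0 * / INR n) * INR n) with ((Di + 1) * INR n + x z0) by (field; lra). lra. }
  assert (H2 : Di - 1 <= inner w v).
  { apply (cv_ge _ _ _ (- x z0) Hrot). intros n Hn. specialize (Hsum n).
    assert (0 < INR n) by (apply lt_0_INR; lia). unfold Rdiv.
    apply Rmult_le_reg_r with (INR n); auto. rewrite Rmult_assoc, Rinv_l by lra.
    replace ((Di - 1 - - x z0 * / INR n) * INR n) with ((Di - 1) * INR n + x z0) by (field; lra). lra. }
  apply Rabs_le. fold Di. lra.
Qed.

End Birkhoff.

(** Increments grow at most linearly (rot_bound), and the weights 2^-||i|| are summable. *)
Definition Wabs {d} (w : Fin.t d -> R) : R := sumFinR d (fun m => Rabs (w m)).

Lemma Wabs_nonneg d (w : Fin.t d -> R) : 0 <= Wabs w.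
Proof.
  unfold Wabs. induction d; simpl; [lra|].
  pose proof (Rabs_pos (w Fin.F1)). specialize (IHd (fun k => w (Fin.FS k))). lra.
Qed.

Lemma inner_bound d (w : Fin.t d -> R) (v : Zd d) : Rabs (inner w v) <= Wabs w * IZR (norm1 v).
Proof.
  unfold inner, Wabs. induction d; simpl; [rewrite Rabs_R0; unfold norm1; simpl; lra|].
  change (norm1 v) with (Z.abs (v Fin.F1) + norm1 (fun k => v (Fin.FS k)))%Z. rewrite plus_IZR.
  specialize (IHd (fun k => w (Fin.FS k)) (fun k => v (Fin.FS k))).
  eapply Rle_trans; [apply Rabs_triang|]. rewrite Rabs_mult, <- abs_IZR.
  pose proof (Wabs_nonneg d (fun k => w (Fin.FS k))). unfold Wabs in H.
  pose proof (Rabs_pos (w Fin.F1)). pose proof (IZR_le _ _ (Z.abs_nonneg (v Fin.F1))).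
  pose proof (IZR_le _ _ (norm1_nonneg d (fun k => v (Fin.FS k)))). nra.
Qed.

Lemma zrange_S N : zrange (S N) = (- Z.of_nat (S N))%Z :: zrange N ++ [Z.of_nat (S N)].
Proof.
  unfold zrange. replace (2 * S N + 1)%nat with (S (S (2 * N + 1))) by lia.
  rewrite <- cons_seq, seq_S, <- seq_shift. cbn [map]. rewrite map_app, map_map. cbn [map].
  apply f_equal2; [lia|]. apply f_equal2; [apply map_ext; intros; lia|]. apply f_equal2; [lia|reflexivity].
Qed.

Lemma zrange_sum q N : 0 <= q < 1 ->
  lsum (zrange N) (fun a => q ^ Z.to_nat (Z.abs a)) <= (1 + q) / (1 - q) - 2 * q ^ (S N) / (1 - q).
Proof.
  intros Hq. induction N.
  - unfold zrange. simpl. rewrite lsum_cons, lsum_nil. simpl. right. field. lra.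
  - rewrite zrange_S, lsum_cons, lsum_app, lsum_cons, lsum_nil.
    replace (Z.to_nat (Z.abs (- Z.of_nat (S N)))) with (S N) by lia.
    replace (Z.to_nat (Z.abs (Z.of_nat (S N)))) with (S N) by lia.
    replace ((1 + q) / (1 - q) - 2 * q ^ S (S N) / (1 - q)) with
      ((1 + q) / (1 - q) - 2 * q ^ S N / (1 - q) + 2 * q ^ S N) by (simpl; field; lra). lra.
Qed.

Lemma cube_sum d q N : 0 <= q < 1 ->
  lsum (cube d N) (fun p => q ^ Z.to_nat (norm1 p)) <= ((1 + q) / (1 - q)) ^ d.
Proof.
  intros Hq. induction d.
  - simpl. rewrite lsum_cons, lsum_nil. unfold norm1. simpl. lra.
  - simpl cube. rewrite lsum_flat_map.
    set (Sd := lsum (cube d N) (fun p => q ^ Z.to_nat (norm1 p))) in *.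
    rewrite (lsum_ext _ _ (fun a => Sd * q ^ Z.to_nat (Z.abs a))).
    2: { intros a _. transitivity (q ^ Z.to_nat (Z.abs a) * Sd); [|ring].
         unfold Sd. rewrite lsum_map, <- lsum_scal. apply lsum_ext. intros v _.
         change (norm1 (fcons a v)) with (Z.abs a + norm1 v)%Z.
         rewrite Z2Nat.inj_add, pow_add by (lia || apply norm1_nonneg). auto. }
    rewrite lsum_scal. simpl. pose proof (zrange_sum q N Hq).
    assert (0 <= 2 * q ^ S N / (1 - q)).
    { unfold Rdiv. apply Rmult_le_pos; [pose proof (pow_le q (S N) ltac:(lra)); lra|].
      left; apply Rinv_0_lt_compat; lra. }
    assert (0 <= lsum (zrange N) (fun a => q ^ Z.to_nat (Z.abs a))) by (apply lsum_nonneg; intros; apply pow_le; lra).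
    assert (0 <= Sd) by (apply lsum_nonneg; intros; apply pow_le; lra).
    rewrite Rmult_comm. apply Rmult_le_compat; lra.
Qed.

Lemma list_bound {d} (l : list (Zd d)) : exists N, forall p, In p l -> forall m, (Z.abs (p m) <= Z.of_nat N)%Z.
Proof.
  induction l as [|p l [N HN]]; [exists 0%nat; intros _ []|].
  exists (max N (Z.to_nat (norm1 p))). intros p' [<-|Hp] m.
  - pose proof (norm1_coord d p m). lia.
  - specialize (HN p' Hp m). lia.
Qed.

Lemma linear_le_exp n : INR n <= 2 * (3 / 2) ^ n.
Proof.
  assert (forall n, 1 + INR n / 2 <= (3/2) ^ n).
  { induction n0; [simpl; lra|]. rewrite S_INR. simpl.
    pose proof (pow_le (3/2) n0 ltac:(lra)). pose proof (pos_INR n0). nra. }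
  specialize (H n). lra.
Qed.

Lemma sum_weighted {d} (l : list (Zd d)) a b : NoDup l -> 0 <= a -> 0 <= b ->
  lsum l (fun p => (/ 2) ^ Z.to_nat (norm1 p) * (a + b * INR (Z.to_nat (norm1 p)))) <= (a + 2 * b) * 7 ^ d.
Proof.
  intros ND Ha Hb. destruct (list_bound l) as [N HN].
  eapply Rle_trans; [apply (lsum_le _ _ (fun p => (a + 2 * b) * (3/4) ^ Z.to_nat (norm1 p)))|].
  { intros p _. set (n := Z.to_nat (norm1 p)). pose proof (linear_le_exp n).
    assert ((/ 2) ^ n <= (3/4) ^ n) by (apply pow_incr; lra).
    assert (0 <= (/2) ^ n) by (apply pow_le; lra).
    assert ((/2) ^ n * (3/2) ^ n = (3/4) ^ n) by (rewrite <- Rpow_mult_distr; f_equal; field).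
    assert ((/2) ^ n * (b * INR n) <= (/2) ^ n * (b * (2 * (3/2) ^ n)))
      by (apply Rmult_le_compat_l; [auto|apply Rmult_le_compat_l; auto]).
    assert (a * (/2) ^ n <= a * (3/4) ^ n) by (apply Rmult_le_compat_l; auto). nra. }
  rewrite lsum_scal. apply Rmult_le_compat_l; [lra|].
  eapply Rle_trans; [apply (nodup_sub_sum l (cube d N)); auto|].
  - intros p Hp. apply cube_in. apply HN; auto.
  - intros; apply pow_le; lra.
  - replace 7 with ((1 + 3/4) / (1 - 3/4)) by field. apply cube_sum. lra.
Qed.

Lemma birk_inX {d} (x : config d) w : birkhoff x -> rot_vector x w -> inX x.
Proof.
  intros HB Hr. set (a := Rabs (x z0) + 1). set (b := Wabs w).
  assert (Ha : 0 <= a) by (unfold a; pose proof (Rabs_pos (x z0)); lra).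
  assert (Hb : 0 <= b) by apply Wabs_nonneg.
  exists ((a + 2 * b) * 7 ^ d). intros l ND.
  eapply Rle_trans; [|apply (sum_weighted l a b ND Ha Hb)].
  apply lsum_le. intros p _. apply Rmult_le_compat_l; [apply pow_le; lra|].
  pose proof (rot_bound x w p z0 HB Hr) as H.
  replace (zadd z0 p) with p in H by (apply zeq; intros; unfold zadd, z0; lia).
  pose proof (inner_bound d w p) as H0.
  rewrite INR_IZR_INZ, Z2Nat.id by apply norm1_nonneg. fold b in H0.
  apply Rabs_le_inv in H. apply Rabs_le_inv in H0.
  pose proof (Rle_abs (x z0)). pose proof (Rle_abs (- x z0)). rewrite Rabs_Ropp in H2.
  unfold a, Rabs at 1. destruct (Rcase_abs (x p)); lra.
Qed.

(** * The flow keeps Birkhoff oscillations bounded *)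

Lemma growth_bound_diff {d} (v w : R -> config d) T Av Aw :
  growth_bound v T Av -> growth_bound w T Aw -> growth_bound (fun s p => w s p - v s p) T (Av + Aw).
Proof.
  intros Hbv Hbw s i Hs. specialize (Hbv s i Hs). specialize (Hbw s i Hs).
  unfold Rminus. eapply Rle_trans; [apply Rabs_triang|]. rewrite Rabs_Ropp. lra.
Qed.

Lemma growth_bound_shift {d} (v : R -> config d) T A k (l : Z) : 0 <= A -> growth_bound v T A ->
  growth_bound (fun s => tau k l (v s)) T (A * w2 k + Rabs (IZR l)).
Proof.
  intros HA Hb s i Hs. unfold tau. eapply Rle_trans; [apply Rabs_triang|].
  specialize (Hb s (zadd i k) Hs). pose proof (w2_add i k). pose proof (w2_ge1 i). pose proof (w2_ge1 k).
  pose proof (Rabs_pos (IZR l)).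
  assert (A * w2 (zadd i k) <= A * (w2 i * w2 k)) by (apply Rmult_le_compat_l; auto). nra.
Qed.

Section FlowOscillation.
Context {d : nat} {S : Zd d -> config d -> R} {dS : Zd d -> Zd d -> config d -> R}
  {ddS : Zd d -> Zd d -> Zd d -> config d -> R} {r : R} (HS : potentials_ok S dS ddS r).

Lemma flow_shift_order (Psi : R -> config d -> config d) x T v (l : Z) (below : bool) :
  is_flow dS r Psi -> inX x -> 0 <= T ->
  (forall q, if below then x q <= tau v l x q else tau v l x q <= x q) ->
  forall s, 0 <= s <= T -> forall p,
    if below then Psi s x p <= tau v l (Psi s x) p else tau v l (Psi s x) p <= Psi s x p.
Proof.
  intros HP HX HT H0 s Hs p.
  pose proof (flow_csol Psi x HP HX) as Hc.
  destruct (apriori HS Psi x T HP HX HT) as [A [HA Hb]].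
  destruct (HP x HX) as [Hx0 _].
  pose proof (growth_bound_shift _ T A v l HA Hb) as Hbs.
  assert (HAs : 0 <= A * w2 v + Rabs (IZR l))
    by (pose proof (w2_ge1 v); pose proof (Rabs_pos (IZR l)); nra).
  destruct below.
  - apply (comparison HS (fun s => Psi s x) (fun s => tau v l (Psi s x)) T (A + (A * w2 v + Rabs (IZR l))));
      auto; [apply (shift_csol HS); auto|lra|apply growth_bound_diff; auto|].
    intros q. rewrite Hx0. apply H0.
  - apply (comparison HS (fun s => tau v l (Psi s x)) (fun s => Psi s x) T ((A * w2 v + Rabs (IZR l)) + A));
      auto; [apply (shift_csol HS); auto|lra|apply growth_bound_diff; auto|].
    intros q. rewrite Hx0. apply H0.
Qed.

(** Along the flow of a Birkhoff configuration with rotation vector w, the increments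
    Psi_s x_{p+v} - Psi_s x_p stay within 2 of <w,v>: compare with integer translates. *)
Lemma flow_local (Psi : R -> config d -> config d) x w T : is_flow dS r Psi ->
  birkhoff x -> rot_vector x w -> 0 <= T ->
  forall s, 0 <= s <= T -> forall p v, Rabs (Psi s x (zadd p v) - Psi s x p - inner w v) <= 2.
Proof.
  intros HP HB Hr HT s Hs p v.
  assert (HX : inX x) by (apply (birk_inX x w); auto).
  set (a := inner w v).
  assert (Hrb : forall q, - 1 <= x (zadd q v) - x q - a <= 1)
    by (intros; apply Rabs_le_inv, rot_bound; auto).
  set (l := (1 - up (a - 1))%Z). destruct (archimed (a - 1)) as [Hu1 Hu2].
  assert (Hl : IZR l = 1 - IZR (up (a - 1))) by (unfold l; rewrite minus_IZR; auto).
  pose proof (flow_shift_order Psi x T v l true HP HX HT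
    (fun q => ltac:(unfold tau; specialize (Hrb q); lra)) s Hs p) as Hlow.
  set (l' := (- up (a + 1))%Z). destruct (archimed (a + 1)) as [Hv1 Hv2].
  assert (Hl' : IZR l' = - IZR (up (a + 1))) by (unfold l'; rewrite opp_IZR; auto).
  pose proof (flow_shift_order Psi x T v l' false HP HX HT
    (fun q => ltac:(unfold tau; specialize (Hrb q); lra)) s Hs p) as Hup.
  simpl in Hlow, Hup. unfold tau in Hlow, Hup. apply Rabs_le. lra.
Qed.

End FlowOscillation.

(** * A uniform lower bound for the nearest-neighbour coupling *)

Lemma incr_ge (phi : nat -> nat) : (forall n, (phi n < phi (S n))%nat) -> forall n, (n <= phi n)%nat.
Proof. intros H n. induction n; [lia|]. specialize (H n). lia. Qed.

Lemma incr_mono (phi : nat -> nat) : (forall n, (phi n < phi (S n))%nat) ->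
  forall n m, (n <= m)%nat -> (phi n <= phi m)%nat.
Proof. intros H n m Hnm. induction Hnm; [lia|]. specialize (H m). lia. Qed.

Lemma cv_sub (u : nat -> R) l (psi : nat -> nat) : (forall n, (psi n < psi (S n))%nat) ->
  Un_cv u l -> Un_cv (fun n => u (psi n)) l.
Proof.
  intros Hp Hu eps He. destruct (Hu eps He) as [N HN]. exists N. intros n Hn. apply HN.
  pose proof (incr_ge psi Hp n). lia.
Qed.

Lemma cv_const c : Un_cv (fun _ => c) c.
Proof. intros eps He. exists 0%nat. intros. unfold Rdist. rewrite Rminus_diag, Rabs_R0. lra. Qed.

Lemma inner_cv d (u : nat -> Fin.t d -> R) w v : (forall m, Un_cv (fun n => u n m) (w m)) ->
  Un_cv (fun n => inner (u n) v) (inner w v).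
Proof.
  unfold inner. revert u w v. induction d; intros u w v H; simpl; [apply cv_const|].
  apply CV_plus; [apply CV_mult; [apply H|apply cv_const]|].
  apply (IHd (fun n k => u n (Fin.FS k)) (fun k => w (Fin.FS k)) (fun k => v (Fin.FS k))). auto.
Qed.

Lemma K_bound d (K : (Fin.t d -> R) -> Prop) : compactRd K -> forall v : Zd d,
  exists B, forall w, K w -> Rabs (inner w v) <= B.
Proof.
  intros HK v. apply NNPP. intros Hno.
  assert (Hs : forall n : nat, exists w, K w /\ INR n < Rabs (inner w v)).
  { intros n. apply NNPP. intros Hn. apply Hno. exists (INR n). intros w Hw.
    apply Rnot_lt_le. intros Hlt. apply Hn. exists w; auto. }
  destruct (choice _ Hs) as [u Hu].
  destruct (HK u (fun n => proj1 (Hu n))) as [phi [w [Hphi [_ Hcv]]]].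
  destruct (inner_cv d (fun n => u (phi n)) w v Hcv 1 ltac:(lra)) as [N HN].
  destruct (large_nat (Rabs (inner w v) + 1)) as [n0 [_ Hn0]].
  set (n := max N n0). specialize (HN n ltac:(lia)). unfold Rdist in HN.
  pose proof (proj2 (Hu (phi n))). pose proof (incr_ge phi Hphi n).
  assert (INR n0 <= INR (phi n)) by (apply le_INR; lia).
  pose proof (Rabs_triang_inv (inner (u (phi n)) v) (inner w v)). lra.
Qed.

Lemma list_bound_ex {A} (L : list A) (P : A -> R -> Prop) : (forall a, exists B, P a B) ->
  (forall a B B', B <= B' -> P a B -> P a B') -> exists B, 0 <= B /\ forall a, In a L -> P a B.
Proof.
  intros H Hm. induction L as [|a L [B [HB0 HB]]]; [exists 0; split; [lra|intros _ []]|].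
  destruct (H a) as [Ba HBa]. exists (B + Rabs Ba). pose proof (Rabs_pos Ba). split; [lra|].
  intros a' [<-|Ha'].
  - apply (Hm a Ba); auto. pose proof (Rle_abs Ba). lra.
  - apply (Hm a' B); auto. lra.
Qed.

Lemma extract1 (s : nat -> R) B : (forall n, Rabs (s n) <= B) ->
  exists psi l, (forall n, (psi n < psi (S n))%nat) /\ Un_cv (fun n => s (psi n)) l.
Proof.
  intros Hs. destruct (Bolzano_Weierstrass s (fun c => - B <= c <= B) (compact_P3 (- B) B)) as [l Hl].
  { intros n. apply Rabs_le_inv; auto. }
  assert (Hch : forall Nk : nat * nat, exists p, (fst Nk <= p)%nat /\ Rabs (s p - l) < / INR (S (snd Nk))).
  { intros [N k]. assert (Hk : 0 < / INR (S k)) by (apply Rinv_0_lt_compat, lt_0_INR; lia).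
    destruct (Hl (disc l (mkposreal _ Hk)) N) as [p [Hp1 Hp2]].
    { exists (mkposreal _ Hk). intros y Hy; auto. }
    exists p; split; auto. }
  destruct (choice _ Hch) as [pick Hpick].
  set (psi := fix psi n := match n with O => pick (0%nat, 0%nat) | S n' => pick (S (psi n'), S n') end).
  exists psi, l. split.
  - intros n. simpl. specialize (Hpick (S (psi n), S n)). simpl in Hpick. lia.
  - assert (Hb : forall n, Rabs (s (psi n) - l) < / INR (S n)).
    { intros [|n]; [apply (Hpick (0%nat, 0%nat))|apply (Hpick (S (psi n), S n))]. }
    intros eps He. destruct (large_nat (/ eps)) as [N [_ HN]]. exists N. intros n Hn.
    unfold Rdist. eapply Rlt_le_trans; [apply Hb|].
    assert (INR N <= INR (S n)) by (apply le_INR; lia).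
    assert (0 < INR N) by (apply Rlt_trans with (/ eps); [apply Rinv_0_lt_compat; lra|auto]).
    rewrite <- (Rinv_inv eps). apply Rinv_le_contravar; [apply Rinv_0_lt_compat; lra|lra].
Qed.

Lemma extract {d} (L : list (Zd d)) (W : nat -> config d) B :
  (forall n v, In v L -> Rabs (W n v) <= B) ->
  exists (phi : nat -> nat) (g : config d), (forall n, (phi n < phi (S n))%nat) /\
    forall v, In v L -> Un_cv (fun n => W (phi n) v) (g v).
Proof.
  induction L as [|v L IH]; intros Hb.
  - exists (fun n => n), (fun _ => 0). split; [intros; lia|intros _ []].
  - destruct (IH (fun n v' Hv' => Hb n v' (or_intror Hv'))) as [phi1 [g1 [Hphi1 Hg1]]].
    destruct (extract1 (fun n => W (phi1 n) v) B (fun n => Hb _ _ (or_introl eq_refl)))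
      as [psi [l [Hpsi Hl]]].
    exists (fun n => phi1 (psi n)), (fun u => if excluded_middle_informative (u = v) then l else g1 u).
    split.
    + intros n. specialize (Hpsi n). pose proof (incr_mono phi1 Hphi1 (S (psi n)) (psi (S n)) Hpsi).
      specialize (Hphi1 (psi n)). lia.
    + intros u Hu. destruct (excluded_middle_informative (u = v)) as [->|Hne]; [exact Hl|].
      destruct Hu as [->|Hu]; [congruence|]. apply (cv_sub (fun n => W (phi1 n) u)); auto.
Qed.

Lemma cv_list {A} (L : list A) (s : A -> nat -> R) (g : A -> R) :
  (forall v, In v L -> Un_cv (s v) (g v)) ->
  forall eps, 0 < eps -> exists N, forall n, (N <= n)%nat -> forall v, In v L -> Rabs (s v n - g v) < eps.
Proof.
  induction L as [|a L IH]; intros H eps He; [exists 0%nat; intros _ _ _ []|].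
  destruct (IH (fun v Hv => H v (or_intror Hv)) eps He) as [N1 HN1].
  destruct (H a (or_introl eq_refl) eps He) as [N2 HN2].
  exists (max N1 N2). intros n Hn v [<-|Hv]; [apply HN2; lia|apply HN1; auto; lia].
Qed.

Section Coupling.
Context {d : nat} {S : Zd d -> config d -> R} {dS : Zd d -> Zd d -> config d -> R}
  {ddS : Zd d -> Zd d -> Zd d -> config d -> R} {r : R} (HS : potentials_ok S dS ddS r).

(** At the origin, on local shapes with w_0 in [0,1] and oscillation at most B, the coupling
    to a fixed neighbour e is at most -c < 0: by compactness of such shapes, continuity
    of ddS and the strict inequality in (D). *)
Lemma coupling_at_origin (e : Zd d) : norm1 (zsub z0 e) = 1%Z -> forall B, 0 <= B ->
  exists c, 0 < c /\ forall w : config d, 0 <= w z0 <= 1 ->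
    (forall v, IZR (norm1 v) <= r -> Rabs (w v - w z0) <= B) -> ddS z0 z0 e w <= - c.
Proof.
  intros He B HB. apply NNPP. intros Hno.
  assert (Hs : forall n : nat, exists w : config d,
    (0 <= w z0 <= 1 /\ (forall v, IZR (norm1 v) <= r -> Rabs (w v - w z0) <= B))
    /\ - / INR (Datatypes.S n) < ddS z0 z0 e w).
  { intros n. apply NNPP. intros Hn. apply Hno. exists (/ INR (Datatypes.S n)).
    split; [apply Rinv_0_lt_compat, lt_0_INR; lia|]. intros w Hw1 Hw2.
    apply Rnot_lt_le. intros Hlt. apply Hn. exists w; auto. }
  destruct (choice _ Hs) as [W HW].
  set (Lc := range_list (r := r) (@z0 d)).
  assert (Hb : forall n v, In v Lc -> Rabs (W n v) <= B + 1).
  { intros n v Hv. apply range_list_in in Hv. rewrite zsub_z0 in Hv. destruct (HW n) as [[H1 H2] _].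
    specialize (H2 v Hv). replace (W n v) with ((W n v - W n z0) + W n z0) by ring.
    eapply Rle_trans; [apply Rabs_triang|]. rewrite (Rabs_right (W n z0)) by lra. lra. }
  destruct (extract Lc W (B + 1) Hb) as [phi [g [Hphi Hg]]].
  pose proof (pot_neighbor_neg HS z0 e g He) as Hneg.
  set (eta := - ddS z0 z0 e g / 2). assert (Heta : 0 < eta) by (unfold eta; lra).
  destruct (pot_ddS_cont HS z0 z0 e g eta Heta) as [del [Hdel Hc]].
  destruct (cv_list Lc (fun v n => W (phi n) v) g Hg del Hdel) as [N HN].
  destruct (large_nat (/ eta)) as [n0 [_ Hn0]].
  set (n := max N n0).
  assert (Hclose : Rabs (ddS z0 z0 e (W (phi n)) - ddS z0 z0 e g) < eta).
  { apply Hc. intros m Hm. apply (HN n ltac:(lia) m). apply range_list_in. auto. }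
  destruct (HW (phi n)) as [_ Hlow].
  assert (Hph : (n0 <= phi n)%nat) by (pose proof (incr_ge phi Hphi n); lia).
  assert (/ INR (Datatypes.S (phi n)) < eta).
  { assert (INR n0 < INR (Datatypes.S (phi n))) by (apply lt_INR; lia). pose proof (pos_INR n0).
    rewrite <- (Rinv_inv eta). apply Rinv_lt_contravar; [|lra].
    apply Rmult_lt_0_compat; [apply Rinv_0_lt_compat; lra|lra]. }
  apply Rabs_def2 in Hclose as [Hc1 Hc2]. unfold eta in *. lra.
Qed.

(** The same bound holds uniformly at every site and for every neighbour, by covariance (B):
    translate by tau_{i,l} to move i to the origin and z_i into [0,1]. *)
Lemma uniform_coupling B : 0 <= B -> exists c, 0 < c /\
  forall (i k : Zd d) (z : config d), norm1 (zsub i k) = 1%Z ->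
    (forall v, IZR (norm1 v) <= r -> Rabs (z (zadd i v) - z i) <= B) -> ddS i i k z <= - c.
Proof.
  intros HB.
  destruct (list_bound_ex (ball (@z0 d) 1) (fun e M => 0 <= M /\ (norm1 (zsub z0 e) = 1%Z ->
     forall w : config d, 0 <= w z0 <= 1 -> (forall v, IZR (norm1 v) <= r -> Rabs (w v - w z0) <= B) ->
     ddS z0 z0 e w <= - / (M + 1)))) as [M [HM0 HM]].
  { intros e. destruct (classic (norm1 (zsub z0 e) = 1%Z)) as [He|He]; [|exists 0; split; [lra|tauto]].
    destruct (coupling_at_origin e He B HB) as [c [Hc Hcw]]. exists (/ c).
    split; [left; apply Rinv_0_lt_compat; auto|]. intros _ w Hw1 Hw2. specialize (Hcw w Hw1 Hw2).
    assert (/ (/ c + 1) <= c); [|lra].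
    replace (/ (/ c + 1)) with (c / (1 + c)) by (field; lra).
    apply Rmult_le_reg_r with (1 + c); [lra|]. unfold Rdiv. rewrite Rmult_assoc, Rinv_l by lra. nra. }
  { intros e B1 B2 H12 [HB1 H1]. split; [lra|]. intros He w Hw1 Hw2. specialize (H1 He w Hw1 Hw2).
    assert (/ (B2 + 1) <= / (B1 + 1)) by (apply Rinv_le_contravar; lra). lra. }
  exists (/ (M + 1)). split; [apply Rinv_0_lt_compat; lra|].
  intros i k z Hik Hz. set (e := zsub k i).
  assert (He : norm1 (zsub z0 e) = 1%Z).
  { unfold e. replace (zsub z0 (zsub k i)) with (zsub i k) by (apply zeq; intros; unfold zsub, z0; lia). auto. }
  assert (Hein : In e (ball z0 1)).
  { apply ball_in. rewrite zsub_z0. unfold e. rewrite norm1_sub_sym, Hik. lra. }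
  destruct (HM e Hein) as [_ HMe]. specialize (HMe He).
  set (l := (- up (z i) + 1)%Z). destruct (archimed (z i)) as [Ha1 Ha2].
  assert (Hw0 : tau i l z z0 = z i + IZR l).
  { unfold tau. replace (zadd z0 i) with i by (apply zeq; intros; unfold zadd, z0; lia). auto. }
  replace (ddS i i k z) with (ddS z0 z0 e (tau i l z)).
  - apply HMe.
    + rewrite Hw0. unfold l. rewrite plus_IZR, opp_IZR. lra.
    + intros v Hv. rewrite Hw0. unfold tau.
      replace (zadd v i) with (zadd i v) by (apply zeq; intros; unfold zadd; lia).
      replace (z (zadd i v) + IZR l - (z i + IZR l)) with (z (zadd i v) - z i) by ring. auto.
  - rewrite (ddS_equiv HS). f_equal; apply zeq; intros; unfold e, zadd, zsub, z0; lia.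
Qed.

End Coupling.

(** * Propagation of positivity along lattice paths *)

(** If u_i' + Ch u_i >= 0 everywhere and u_i' + Ch u_i >= c u_j for neighbours j, with u(0) >= 0,
    then exp(Ch s) u_i(s) >= (c s)^m / m! * u_k(0) whenever ||i - k|| = m: induction on m,
    comparing exp(Ch s) u_i(s) with the polynomial K s^(m+1). *)
Lemma path_growth {d} (u u' : R -> Zd d -> R) (Ch c T : R) : 0 <= c ->
  (forall p s, derivable_pt_lim (fun s => u s p) s (u' s p)) ->
  (forall p, 0 <= u 0 p) ->
  (forall s, 0 <= s <= T -> forall i, u' s i + Ch * u s i >= 0) ->
  (forall s, 0 <= s <= T -> forall i j, norm1 (zsub i j) = 1%Z -> u' s i + Ch * u s i >= c * u s j) ->
  forall m s, 0 <= s <= T -> forall i k, norm1 (zsub i k) = Z.of_nat m ->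
    exp (Ch * s) * u s i >= (c * s) ^ m / INR (fact m) * u 0 k.
Proof.
  intros Hc Hdu Hu0 Hself Hnb.
  set (F := fun i s => exp (Ch * s) * u s i).
  set (F' := fun i s => exp (Ch * s) * (u' s i + Ch * u s i)).
  assert (HF : forall i s, derivable_pt_lim (F i) s (F' i s)).
  { intros i s. pose proof (derivable_pt_lim_mult _ _ s _ _ (exp_lin Ch s) (Hdu i s)) as Hm.
    unfold F, F'. replace (exp (Ch * s) * (u' s i + Ch * u s i))
      with (Ch * exp (Ch * s) * u s i + exp (Ch * s) * u' s i) by ring. exact Hm. }
  assert (HF0 : forall i, F i 0 = u 0 i) by (intros; unfold F; rewrite Rmult_0_r, exp_0; ring).
  induction m as [|m IH]; intros s Hs i k Hik.
  - apply norm1_zero_eq in Hik. subst k.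
    pose proof (deriv_lower (F i) (F' i) 0 s 0 ltac:(lra) (fun c _ => HF i c)) as HD.
    assert (HD' : F i s - F i 0 >= 0 * (s - 0)).
    { apply HD. intros c0 Hc0. pose proof (exp_pos (Ch * c0)). pose proof (Hself c0 ltac:(lra) i).
      unfold F'. nra. }
    rewrite HF0 in HD'. unfold F in HD'. simpl. lra.
  - destruct (path_step d i k m Hik) as [j [Hij Hjk]].
    set (K1 := c ^ Datatypes.S m / INR (fact (Datatypes.S m)) * u 0 k).
    set (G := fun s => F i s - K1 * s ^ Datatypes.S m).
    set (G' := fun s => F' i s - K1 * (INR (Datatypes.S m) * s ^ m)).
    assert (HG : forall s, derivable_pt_lim G s (G' s)).
    { intros s0. apply (derivable_pt_lim_minus _ _ s0 _ _ (HF i s0)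
        (derivable_pt_lim_scal _ K1 s0 _ (derivable_pt_lim_pow s0 (Datatypes.S m)))). }
    assert (HG' : forall s0, 0 <= s0 <= s -> 0 <= G' s0).
    { intros s0 Hs0.
      assert (H1 : F' i s0 >= exp (Ch * s0) * (c * u s0 j)).
      { apply Rle_ge, Rmult_le_compat_l; [left; apply exp_pos|]. apply Rge_le, Hnb; auto. lra. }
      specialize (IH s0 ltac:(lra) j k Hjk). unfold F in IH.
      assert (H2 : K1 * (INR (Datatypes.S m) * s0 ^ m) = c * ((c * s0) ^ m / INR (fact m) * u 0 k)).
      { unfold K1. rewrite fact_simpl, mult_INR, Rpow_mult_distr. simpl pow. field.
        split; [apply INR_fact_neq_0|apply not_0_INR; lia]. }
      assert (exp (Ch * s0) * (c * u s0 j) >= c * ((c * s0) ^ m / INR (fact m) * u 0 k)).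
      { replace (exp (Ch * s0) * (c * u s0 j)) with (c * (exp (Ch * s0) * u s0 j)) by ring.
        apply Rle_ge, Rmult_le_compat_l; lra. }
      unfold G'. lra. }
    pose proof (deriv_lower G G' 0 s 0 ltac:(lra) (fun c0 _ => HG c0) HG') as HD.
    assert (HG0 : G 0 = u 0 i) by (unfold G; rewrite HF0; simpl; ring).
    replace ((c * s) ^ Datatypes.S m / INR (fact (Datatypes.S m)) * u 0 k) with (K1 * s ^ Datatypes.S m)
      by (unfold K1; rewrite Rpow_mult_distr; field; apply INR_fact_neq_0).
    pose proof (Hu0 i). unfold G, F in HD, HG0. lra.
Qed.

(** * The flow between ordered Birkhoff configurations *)

Section Monotonicity.
Context {d : nat} {S : Zd d -> config d -> R} {dS : Zd d -> Zd d -> config d -> R}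
  {ddS : Zd d -> Zd d -> Zd d -> config d -> R} {r : R} (HS : potentials_ok S dS ddS r)
  (Psi : R -> config d -> config d) (HPsi : is_flow dS r Psi).

Lemma flow_monotone x y T : inX x -> inX y -> 0 <= T -> (forall p, x p <= y p) ->
  forall s, 0 <= s <= T -> forall p, Psi s x p <= Psi s y p.
Proof.
  intros HXx HXy HT Hxy.
  destruct (apriori HS Psi x T HPsi HXx HT) as [Ax [HAx Hbx]].
  destruct (apriori HS Psi y T HPsi HXy HT) as [Ay [HAy Hby]].
  destruct (HPsi x HXx) as [H0x _]. destruct (HPsi y HXy) as [H0y _].
  apply (comparison HS (fun s => Psi s x) (fun s => Psi s y) T (Ax + Ay));
    try apply flow_csol; auto; [lra|apply growth_bound_diff; auto|].
  intros p. simpl. rewrite H0x, H0y. auto.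
Qed.

Lemma flow_coupling (K : (Fin.t d -> R) -> Prop) T : compactRd K -> 0 <= T -> exists c, 0 < c /\
  forall x y wx wy, birkhoff x -> birkhoff y -> K wx -> rot_vector x wx -> K wy -> rot_vector y wy ->
  forall s, 0 <= s <= T -> forall th, 0 <= th <= 1 -> forall i k, norm1 (zsub i k) = 1%Z ->
    ddS i i k (lin (Psi s x) th (fun p => Psi s y p - Psi s x p)) <= - c.
Proof.
  intros HK HT.
  destruct (list_bound_ex (ball (@z0 d) r) (fun v B => forall w, K w -> Rabs (inner w v) <= B)
     (fun v => K_bound d K HK v)) as [BK [HBK0 HBK]].
  { intros v B B' HBB' H w Hw. specialize (H w Hw). lra. }
  destruct (uniform_coupling HS (BK + 2) ltac:(lra)) as [c [Hc Hcs]].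
  exists c. split; auto.
  intros x y wx wy Hbx Hby Kx Rx Ky Ry s Hs th Hth i k Hik. apply Hcs; auto.
  intros v Hv. unfold lin.
  assert (Hvb : In v (ball (@z0 d) r)) by (apply ball_in; rewrite zsub_z0; auto).
  pose proof (Rabs_le_inv _ _ (HBK v Hvb wx Kx)). pose proof (Rabs_le_inv _ _ (HBK v Hvb wy Ky)).
  pose proof (Rabs_le_inv _ _ (flow_local HS Psi x wx T HPsi Hbx Rx HT s Hs i v)).
  pose proof (Rabs_le_inv _ _ (flow_local HS Psi y wy T HPsi Hby Ry HT s Hs i v)).
  apply Rabs_le.
  replace (Psi s x (zadd i v) + th * (Psi s y (zadd i v) - Psi s x (zadd i v)) -
           (Psi s x i + th * (Psi s y i - Psi s x i)))
    with ((1 - th) * (Psi s x (zadd i v) - Psi s x i - inner wx v + inner wx v)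
          + th * (Psi s y (zadd i v) - Psi s y i - inner wy v + inner wy v)) by ring.
  split; nra.
Qed.

End Monotonicity.

Theorem mainTheorem13 (d : nat) (S : Zd d -> config d -> R)
  (dS : Zd d -> Zd d -> config d -> R)
  (ddS : Zd d -> Zd d -> Zd d -> config d -> R) (r : R)
  (Psi : R -> config d -> config d)
  (HS : potentials_ok S dS ddS r) (HPsi : is_flow dS r Psi)
  (t : R) (Ht : 0 < t) (K : (Fin.t d -> R) -> Prop) (HK : compactRd K) (n : nat) :
  exists L, 0 < L /\
    forall x y : config d, birkhoff x -> birkhoff y -> clt x y ->
      (exists w, K w /\ rot_vector x w) -> (exists w, K w /\ rot_vector y w) ->
      forall i k : Zd d, norm1 (zsub i k) = Z.of_nat n ->
        Psi t y i - Psi t x i >= L * (y k - x k).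
Proof.
  destruct (pot_bounded HS) as [C [HC0 HC]].
  destruct (flow_coupling HS Psi HPsi K t HK ltac:(lra)) as [c [Hc Hcpl]].
  set (Ch := ball_size (d := d) (r := r) * C).
  exists (exp (- (Ch * t)) * (c * t) ^ n / INR (fact n)). split.
  { apply Rmult_lt_0_compat; [apply Rmult_lt_0_compat; [apply exp_pos|apply pow_lt; nra]|].
    apply Rinv_0_lt_compat, INR_fact_lt_0. }
  intros x y Hbx Hby [Hxy _] [wx [Kx Rx]] [wy [Ky Ry]] i k Hik.
  pose proof (birk_inX x wx Hbx Rx) as HXx. pose proof (birk_inX y wy Hby Ry) as HXy.
  destruct (HPsi x HXx) as [H0x _]. destruct (HPsi y HXy) as [H0y _].
  pose proof (flow_monotone HS Psi HPsi x y t HXx HXy ltac:(lra) Hxy) as Hmon.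
  set (u := fun s p => Psi s y p - Psi s x p).
  set (du := fun s p => - (gradW dS r (Psi s y) p - gradW dS r (Psi s x) p)).
  assert (Hu0 : forall p, 0 <= u 0 p) by (intros p; unfold u; rewrite H0x, H0y; specialize (Hxy p); lra).
  assert (Hself : forall s, 0 <= s <= t -> forall p, du s p + Ch * u s p >= 0)
    by (intros s Hs p; apply (gradW_diff_ordered HS C HC0 HC), Hmon; auto).
  assert (Hneighbor : forall s, 0 <= s <= t -> forall p j, norm1 (zsub p j) = 1%Z ->
                        du s p + Ch * u s p >= c * u s j).
  { intros s Hs p j Hpj. apply (gradW_diff_neighbor HS C HC0 HC _ _ p j c Hpj).
    - intros m _. specialize (Hmon s Hs m). lra.
    - intros th Hth. apply (Hcpl x y wx wy); auto. }
  pose proof (path_growth u du Ch c t ltac:(lra)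
    (csol_diff _ _ (flow_csol Psi x HPsi HXx) (flow_csol Psi y HPsi HXy))
    Hu0 Hself Hneighbor n t ltac:(lra) i k Hik) as Hpath.
  unfold u in Hpath. rewrite H0x, H0y in Hpath.
  apply Rmult_ge_compat_l with (r := exp (- (Ch * t))) in Hpath; [|left; apply exp_pos].
  rewrite <- Rmult_assoc, <- exp_plus, Rplus_opp_l, exp_0, Rmult_1_l in Hpath.
  replace (exp (- (Ch * t)) * (c * t) ^ n / INR (fact n) * (y k - x k))
    with (exp (- (Ch * t)) * ((c * t) ^ n / INR (fact n) * (y k - x k))) by (field; apply INR_fact_neq_0).
  exact Hpath.
Qed.
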